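(* Let $d\ge3$. There is a constant $c_3>0$ such that for all $\lambda>0$ and all $p\in\mathbf{T}^d$, $$\operatorname{Im}\omega(p)\le -c_3\lambda^2[D(p)]^{d-2},$$ where $D(p)=\min\{|p-v|: v=0\ \text{or}\ v=(\pm\frac12,\dots,\pm\frac12)\}$ is the distance from $p$ to the set consisting of the origin and the vertices of $\mathbf{T}^d$.
   Context: $\mathbf{T}^d=[-\frac12,\frac12]^d$, $e(p)=\sum_{j=1}^d(1-\cos(2\pi p^{(j)}))$, $\Theta(\alpha)=\lim_{\varepsilon\to0+}\int_{\mathbf{T}^d}\frac{{\rm d}q}{\alpha-e(q)+i\varepsilon}$, $\theta(p)=\Theta(e(p))$, and $\omega(p)=e(p)+\lambda^2\theta(p)$. *)

From Stdlib Require Import Reals List.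
From Coquelicot Require Import Coquelicot.
Import ListNotations.
Open Scope R_scope.

(* Points of R^d are encoded as functions nat -> R; only coordinates 0..d-1 matter. *)

Fixpoint edisp (d : nat) (p : nat -> R) : R :=
  match d with
  | O => 0
  | S k => edisp k p + (1 - cos (2 * PI * p k))
  end.

Definition in_torus (d : nat) (p : nat -> R) : Prop :=
  forall j, (j < d)%nat -> -/2 <= p j <= /2.

(* Iterated Riemann integral over [-1/2,1/2]^d (coordinates 0..d-1);
   for continuous integrands this is the Lebesgue integral over T^d. *)
Fixpoint iint (d : nat) (f : (nat -> R) -> R) : R :=
  match d with
  | O => f (fun _ => 0)
  | S k => RInt (fun x => iint k (fun q => f (fun i => if Nat.eqb i k then x else q i)))
                (-/2) (/2)
  end.

Definition cint (d : nat) (f : (nat -> R) -> C) : C :=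
  (iint d (fun q => Re (f q)), iint d (fun q => Im (f q))).

Definition Theta_eps (d : nat) (alpha eps : R) : C :=
  cint d (fun q => Cinv ((alpha - edisp d q, eps) : C)).

Definition is_Theta (d : nat) (alpha : R) (z : C) : Prop :=
  filterlim (fun eps => Theta_eps d alpha eps) (at_right 0) (locally z).

Definition is_omega (d : nat) (lam : R) (p : nat -> R) (w : C) : Prop :=
  exists th : C, is_Theta d (edisp d p) th /\
    w = Cplus (RtoC (edisp d p)) (Cmult (RtoC (lam ^ 2)) th).

Fixpoint sqdist (d : nat) (p v : nat -> R) : R :=
  match d with
  | O => 0
  | S k => sqdist k p v + (p k - v k) ^ 2
  end.
Definition dist (d : nat) (p v : nat -> R) : R := sqrt (sqdist d p v).

Fixpoint blists (n : nat) : list (list bool) :=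
  match n with
  | O => [nil]
  | S k => flat_map (fun l => [true :: l; false :: l]) (blists k)
  end.

Definition vertex (b : list bool) : nat -> R :=
  fun j => if nth j b false then /2 else -/2.

Definition Ddist (d : nat) (p : nat -> R) : R :=
  fold_right Rmin (dist d p (fun _ => 0))
             (map (fun b => dist d p (vertex b)) (blists d)).

(* Writing [1 / (alpha - e + i eps)] as the damped time integral
   [- i ∫_0^∞ exp (- eps t) exp (i (alpha - e) t) dt] and integrating over the torus first,
   the torus average of [exp (- i t e(q))] factorises into [d] one-dimensional oscillatory
   integrals, each [O(t^(-1/2))] by van der Corput's lemma; for [d >= 3] their product is
   integrable in [t], so the limit [Theta alpha] exists.
   [- Im Theta_eps alpha] is the torus integral of the Poisson kernel
   [eps / ((alpha - e)^2 + eps^2)]. Let [x] be the diagonal point with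
   [d (1 - cos 2 pi x) = alpha] and [s = sin 2 pi x]. Restricting [d - 1] coordinates to
   windows of width [s / (12 pi (d - 1))] around [x] keeps [e] within [s^2 / 8] of its
   diagonal value, and in the last coordinate the Poisson kernel integrates to an arctangent
   increment of at least [pi / 2] over a window where [e' ~ s]; hence
   [- Im Theta alpha >= c s^(d-2)]. Finally [D(p) <= d s], since
   [2 D(p)^2 <= min (alpha, 2 d - alpha)] while [(d s)^2 = alpha (2 d - alpha)]. *)

From Pilot Require Import Defs.
From Stdlib Require Import Reals Lra Lia FunctionalExtensionality List.
From Coquelicot Require Import Coquelicot.
Open Scope R_scope.

(** * The one-dimensional dispersion relation *)

Definition edisp1 (x : R) : R := 1 - cos (2 * PI * x).

Definition set_coord (q : nat -> R) (k : nat) (x : R) : nat -> R :=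
  fun i => if Nat.eqb i k then x else q i.

Lemma edisp_set_coord_above k j q x :
  (k <= j)%nat -> edisp k (set_coord q j x) = edisp k q.
Proof.
  revert j q x; induction k as [|k IH]; intros j q x Hj; simpl; auto.
  rewrite IH by lia. unfold set_coord.
  replace (Nat.eqb k j) with false; auto.
  symmetry; apply Nat.eqb_neq; lia.
Qed.

Lemma edisp_S_set_coord k q x :
  edisp (S k) (set_coord q k x) = edisp k q + edisp1 x.
Proof.
  simpl. rewrite edisp_set_coord_above by lia. unfold set_coord, edisp1.
  rewrite Nat.eqb_refl. ring.
Qed.

Lemma edisp1_bounds x : 0 <= edisp1 x <= 2.
Proof. unfold edisp1; pose proof (COS_bound (2 * PI * x)); lra. Qed.

Lemma edisp_bounds k q : 0 <= edisp k q <= 2 * INR k.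
Proof.
  induction k as [|k IH]; [simpl; lra|].
  pose proof (edisp1_bounds (q k)) as Hk; unfold edisp1 in Hk.
  rewrite S_INR; cbn [edisp]; lra.
Qed.

Lemma PI_ge_3 : 3 <= PI.
Proof. pose proof PI2_3_2. lra. Qed.

Lemma sin_ge_third u : 0 <= u <= 2 -> u / 3 <= sin u.
Proof.
  intros [H1 H2]. pose proof PI_ge_3.
  pose proof (sin_bound u 0 H1 ltac:(lra)) as [Hs _].
  unfold sin_approx, sin_term in Hs. simpl in Hs.
  assert (u * u <= 4) by nra. nra.
Qed.

Lemma continuous_of_lipschitz_at (f : R -> R) x0 L :
  (forall a, Rabs (a - x0) <= 1 -> Rabs (f a - f x0) <= L * Rabs (a - x0)) ->
  continuous f x0.
Proof.
  intros Hf. apply continuity_pt_filterlim. intros eps Heps.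
  pose proof (Rabs_pos L) as HL.
  exists (Rmin 1 (eps / (Rabs L + 1))). split.
  - apply Rmin_pos; [lra|]. apply Rdiv_lt_0_compat; lra.
  - intros y [_ Hy]. simpl in *. unfold R_dist in *.
    assert (H1 : Rabs (y - x0) <= 1) by (pose proof (Rmin_l 1 (eps / (Rabs L + 1))); lra).
    assert (H2 : Rabs (y - x0) < eps / (Rabs L + 1))
      by (pose proof (Rmin_r 1 (eps / (Rabs L + 1))); lra).
    eapply Rle_lt_trans; [apply Hf; auto|].
    pose proof (Rabs_pos (y - x0)). pose proof (Rle_abs L).
    apply Rle_lt_trans with ((Rabs L + 1) * Rabs (y - x0)); [nra|].
    replace eps with ((Rabs L + 1) * (eps / (Rabs L + 1))) by (field; lra).
    apply Rmult_lt_compat_l; lra.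
Qed.

Lemma lipschitz_continuous (f : R -> R) L :
  (forall a b, Rabs (f a - f b) <= L * Rabs (a - b)) -> forall x, continuous f x.
Proof. intros Hf x. apply continuous_of_lipschitz_at with L. intros a _. apply Hf. Qed.

Lemma lipschitz_of_derive_bound (f df : R -> R) L :
  (forall x, is_derive f x (df x)) -> (forall x, Rabs (df x) <= L) ->
  forall a b, Rabs (f a - f b) <= L * Rabs (a - b).
Proof.
  intros Hd Hb a b.
  destruct (MVT_gen f b a df) as [c [_ Heq]].
  - intros; apply Hd.
  - intros x _. apply continuity_pt_filterlim, (ex_derive_continuous (V := R_NormedModule)).
    eexists; apply Hd.
  - rewrite Heq, Rabs_mult. apply Rmult_le_compat_r; [apply Rabs_pos | apply Hb].
Qed.

Lemma sin_lipschitz a b : Rabs (sin a - sin b) <= Rabs (a - b).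
Proof.
  rewrite <- (Rmult_1_l (Rabs (a - b))).
  apply lipschitz_of_derive_bound with (df := cos).
  - intros x. auto_derive; auto; ring.
  - intros x. pose proof (COS_bound x). apply Rabs_le; lra.
Qed.

Lemma sin_le_id u : 0 <= u -> sin u <= u.
Proof.
  intros Hu. pose proof (sin_lipschitz u 0) as H. rewrite sin_0, !Rminus_0_r in H.
  pose proof (Rle_abs (sin u)). rewrite (Rabs_right u) in H by lra. lra.
Qed.

Lemma cos_lipschitz a b : Rabs (cos a - cos b) <= Rabs (a - b).
Proof.
  rewrite <- (Rmult_1_l (Rabs (a - b))).
  apply lipschitz_of_derive_bound with (df := fun x => - sin x).
  - intros x. auto_derive; auto; ring.
  - intros x. pose proof (SIN_bound x). apply Rabs_le; lra.
Qed.

Lemma sin_2PI_lipschitz x y :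
  Rabs (sin (2 * PI * y) - sin (2 * PI * x)) <= 2 * PI * Rabs (y - x).
Proof.
  eapply Rle_trans; [apply sin_lipschitz|].
  replace (2 * PI * y - 2 * PI * x) with (2 * PI * (y - x)) by ring.
  rewrite Rabs_mult, (Rabs_right (2 * PI)); [lra|]. pose proof PI_RGT_0; lra.
Qed.

Lemma edisp1_lipschitz a b : Rabs (edisp1 a - edisp1 b) <= 2 * PI * Rabs (a - b).
Proof.
  unfold edisp1.
  replace (1 - cos (2 * PI * a) - (1 - cos (2 * PI * b)))
    with (- (cos (2 * PI * a) - cos (2 * PI * b))) by ring.
  rewrite Rabs_Ropp. eapply Rle_trans; [apply cos_lipschitz|].
  replace (2 * PI * a - 2 * PI * b) with ((2 * PI) * (a - b)) by ring.
  rewrite Rabs_mult, (Rabs_right (2 * PI)); [lra|]. pose proof PI_RGT_0; lra.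
Qed.

Lemma edisp1_continuous x : continuous edisp1 x.
Proof. apply lipschitz_continuous with (2 * PI). apply edisp1_lipschitz. Qed.

Lemma is_derive_edisp1 y : is_derive edisp1 y (2 * PI * sin (2 * PI * y)).
Proof. unfold edisp1. auto_derive; auto. ring. Qed.

Lemma exp_lipschitz_below M a b :
  a <= M -> b <= M -> Rabs (exp a - exp b) <= exp M * Rabs (a - b).
Proof.
  intros Ha Hb.
  destruct (MVT_gen exp b a exp) as [c [Hc Heq]].
  - intros; apply is_derive_exp.
  - intros x _. apply continuity_pt_filterlim, (ex_derive_continuous (V := R_NormedModule)).
    eexists; apply is_derive_exp.
  - rewrite Heq, Rabs_mult. apply Rmult_le_compat_r; [apply Rabs_pos|].
    rewrite Rabs_right by (apply Rle_ge, Rlt_le, exp_pos).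
    assert (c <= M) by (eapply Rle_trans; [apply Hc | apply Rmax_lub; lra]).
    destruct (Rle_lt_or_eq_dec c M) as [Hlt|Heq']; [auto| |].
    + apply Rlt_le, exp_increasing; auto.
    + rewrite Heq'; lra.
Qed.

(** * Riemann integrals *)

(* [RInt_ext] produces equalities in Coquelicot's module carrier, which [ring]
   does not recognise as [R] until the type is restated. *)
Ltac change_eq_R := match goal with |- ?a = ?b => change (@eq R a b) end.

Lemma RInt_const_R m a b : RInt (fun _ => m) a b = (b - a) * m.
Proof. rewrite RInt_const. reflexivity. Qed.

Lemma ex_RInt_cont (f : R -> R) a b : (forall x, continuous f x) -> ex_RInt f a b.
Proof. intros. apply (ex_RInt_continuous (V := R_CompleteNormedModule)). auto. Qed.

Lemma ex_RInt_lin (f h : R -> R) a b al be : ex_RInt f a b -> ex_RInt h a b ->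
  ex_RInt (fun x => al * f x + be * h x) a b.
Proof.
  intros. apply (ex_RInt_plus (V := R_CompleteNormedModule)
    (fun x => scal al (f x)) (fun x => scal be (h x)));
  apply (ex_RInt_scal (V := R_CompleteNormedModule)); auto.
Qed.

Lemma RInt_lin (f h : R -> R) a b al be : ex_RInt f a b -> ex_RInt h a b ->
  RInt (fun x => al * f x + be * h x) a b = al * RInt f a b + be * RInt h a b.
Proof.
  intros Hf Hh.
  change (RInt (fun x => plus (scal al (f x)) (scal be (h x))) a b
          = plus (scal al (RInt f a b)) (scal be (RInt h a b))).
  rewrite (RInt_plus (V := R_CompleteNormedModule)), !(RInt_scal (V := R_CompleteNormedModule));
    auto; apply (ex_RInt_scal (V := R_CompleteNormedModule)); auto.
Qed.

Lemma ex_RInt_sub (f h : R -> R) a b : ex_RInt f a b -> ex_RInt h a b ->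
  ex_RInt (fun x => f x - h x) a b.
Proof.
  intros. apply (ex_RInt_ext (fun x => 1 * f x + (-1) * h x));
    [intros; (change_eq_R; ring) | apply ex_RInt_lin; auto].
Qed.

Lemma RInt_sub (f h : R -> R) a b : ex_RInt f a b -> ex_RInt h a b ->
  RInt (fun x => f x - h x) a b = RInt f a b - RInt h a b.
Proof.
  intros. rewrite (RInt_ext _ (fun x => 1 * f x + (-1) * h x)) by (intros; (change_eq_R; ring)).
  rewrite RInt_lin; auto. (change_eq_R; ring).
Qed.

Lemma RInt_Chasles_cont (f : R -> R) a b c : (forall x, continuous f x) ->
  RInt f a c = RInt f a b + RInt f b c.
Proof.
  intros. symmetry.
  apply (RInt_Chasles (V := R_CompleteNormedModule)); apply ex_RInt_cont; auto.
Qed.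

Lemma abs_RInt_le_abs_bound (f h : R -> R) a b : a <= b ->
  ex_RInt f a b -> ex_RInt h a b ->
  (forall x, a <= x <= b -> Rabs (f x) <= h x) -> Rabs (RInt f a b) <= RInt h a b.
Proof.
  intros Hab Hf Hh Hb. eapply Rle_trans; [apply abs_RInt_le; auto|].
  apply RInt_le; auto; [apply (ex_RInt_norm f a b Hf)|]. intros; apply Hb; lra.
Qed.

Lemma abs_RInt_le_length (f : R -> R) a b : a <= b -> (forall x, continuous f x) ->
  (forall x, Rabs (f x) <= 1) -> Rabs (RInt f a b) <= b - a.
Proof.
  intros Hab Hc Hb. rewrite <- (Rmult_1_r (b - a)), <- RInt_const_R.
  apply abs_RInt_le_abs_bound; auto; [apply ex_RInt_cont; auto | apply ex_RInt_const].
Qed.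

Lemma RInt_diff_bound (f h : R -> R) a b M : ex_RInt f a b -> ex_RInt h a b ->
  (forall x, Rmin a b <= x <= Rmax a b -> Rabs (f x - h x) <= M) ->
  Rabs (RInt f a b - RInt h a b) <= Rabs (b - a) * M.
Proof.
  intros Hf Hh Hb.
  assert (Hgen : forall a b, a <= b -> ex_RInt f a b -> ex_RInt h a b ->
     (forall x, a <= x <= b -> Rabs (f x - h x) <= M) ->
     Rabs (RInt f a b - RInt h a b) <= (b - a) * M).
  { clear. intros a b Hab Hf Hh Hb. rewrite <- RInt_sub, <- RInt_const_R by auto.
    apply abs_RInt_le_abs_bound; auto; [apply ex_RInt_sub; auto | apply ex_RInt_const]. }
  destruct (Rle_or_lt a b).
  - rewrite (Rabs_right (b - a)) by lra. apply Hgen; auto.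
    intros; apply Hb. rewrite Rmin_left, Rmax_right; lra.
  - rewrite (Rabs_left (b - a)) by lra.
    rewrite <- (opp_RInt_swap f), <- (opp_RInt_swap h) by (apply ex_RInt_swap; auto).
    replace (opp (RInt f b a) - opp (RInt h b a)) with (- (RInt f b a - RInt h b a))
      by (unfold opp; simpl; ring).
    rewrite Rabs_Ropp. replace (- (b - a)) with (a - b) by ring.
    apply Hgen; try lra; try (apply ex_RInt_swap; auto).
    intros; apply Hb. rewrite Rmin_right, Rmax_left; lra.
Qed.

Lemma RInt_nonneg_subinterval_le (f : R -> R) a a' b' b :
  a <= a' -> a' <= b' -> b' <= b ->
  (forall x, continuous f x) -> (forall x, 0 <= f x) -> RInt f a' b' <= RInt f a b.
Proof.
  intros H1 H2 H3 Hc H0.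
  assert (Hpos : forall u v, u <= v -> 0 <= RInt f u v).
  { intros u v Huv. rewrite <- (Rmult_0_r (v - u)), <- RInt_const_R.
    apply RInt_le; auto; [apply ex_RInt_const | apply ex_RInt_cont; auto]. }
  rewrite (RInt_Chasles_cont f a a' b), (RInt_Chasles_cont f a' b' b) by auto.
  pose proof (Hpos a a' H1). pose proof (Hpos b' b H3). lra.
Qed.

(** * Integrals over the torus *)

(* Joint local Lipschitz continuity is the integrability bookkeeping: it survives every
   integration below, so all the iterated Riemann integrals that occur exist. *)
Definition loc_lipschitz2 (H : R -> R -> R) : Prop :=
  forall r, 0 <= r -> exists L, 0 <= L /\
    forall y y' e e', Rabs y <= r -> Rabs y' <= r -> Rabs e <= r -> Rabs e' <= r ->
      Rabs (H y e - H y' e') <= L * (Rabs (y - y') + Rabs (e - e')).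

Lemma loc_lipschitz2_const m : loc_lipschitz2 (fun _ _ => m).
Proof.
  intros r Hr. exists 0. split; [lra|]. intros.
  unfold Rminus. rewrite Rplus_opp_r, Rabs_R0. lra.
Qed.

Lemma loc_lipschitz2_of_lipschitz (f : R -> R) L : 0 <= L ->
  (forall a b, Rabs (f a - f b) <= L * Rabs (a - b)) -> loc_lipschitz2 (fun _ e => f e).
Proof.
  intros HL Hf r Hr. exists L. split; auto. intros.
  eapply Rle_trans; [apply Hf|]. apply Rmult_le_compat_l; auto.
  pose proof (Rabs_pos (y - y')); lra.
Qed.

Lemma loc_lipschitz2_lin H1 H2 a b : loc_lipschitz2 H1 -> loc_lipschitz2 H2 ->
  loc_lipschitz2 (fun y e => a * H1 y e + b * H2 y e).
Proof.
  intros L1 L2 r Hr.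
  destruct (L1 r Hr) as [K1 [HK1 Hl1]]. destruct (L2 r Hr) as [K2 [HK2 Hl2]].
  pose proof (Rabs_pos a); pose proof (Rabs_pos b).
  exists (Rabs a * K1 + Rabs b * K2). split; [nra|].
  intros y y' e e' Hy Hy' He He'.
  replace (a * H1 y e + b * H2 y e - (a * H1 y' e' + b * H2 y' e'))
    with (a * (H1 y e - H1 y' e') + b * (H2 y e - H2 y' e')) by ring.
  eapply Rle_trans; [apply Rabs_triang|]. rewrite !Rabs_mult.
  pose proof (Hl1 y y' e e' Hy Hy' He He'). pose proof (Hl2 y y' e e' Hy Hy' He He').
  apply Rle_trans with (Rabs a * (K1 * (Rabs (y - y') + Rabs (e - e')))
                        + Rabs b * (K2 * (Rabs (y - y') + Rabs (e - e')))); [|lra].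
  apply Rplus_le_compat; apply Rmult_le_compat_l; auto.
Qed.

Lemma loc_lipschitz2_swap K : loc_lipschitz2 K -> loc_lipschitz2 (fun t x => K x t).
Proof.
  intros HK r Hr. destruct (HK r Hr) as [L [HL Hl]]. exists L; split; auto.
  intros. rewrite Rplus_comm. apply Hl; auto.
Qed.

Lemma loc_lipschitz2_near K : loc_lipschitz2 K -> forall x0 t0, exists L, 0 <= L /\
  forall x t x' t', Rabs (x - x0) <= 1 -> Rabs (t - t0) <= 1 ->
    Rabs (x' - x0) <= 1 -> Rabs (t' - t0) <= 1 ->
    Rabs (K x t - K x' t') <= L * (Rabs (x - x') + Rabs (t - t')).
Proof.
  intros HK x0 t0. pose proof (Rabs_pos x0); pose proof (Rabs_pos t0).
  destruct (HK (Rabs x0 + Rabs t0 + 1)) as [L [HL HLip]]; [lra|].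
  exists L; split; auto. intros x t x' t' H1 H2 H3 H4.
  apply HLip; match goal with |- Rabs ?z <= _ =>
    pose proof (Rabs_triang_inv z x0); pose proof (Rabs_triang_inv z t0); lra end.
Qed.

Lemma loc_lipschitz2_continuous_r K : loc_lipschitz2 K ->
  forall x0 t0, continuous (fun t => K x0 t) t0.
Proof.
  intros HK x0 t0. destruct (loc_lipschitz2_near K HK x0 t0) as [L [HL Hl]].
  apply continuous_of_lipschitz_at with L. intros a Ha.
  eapply Rle_trans; [apply Hl; auto; rewrite Rminus_diag, Rabs_R0; lra|].
  rewrite Rminus_diag, Rabs_R0. lra.
Qed.

Lemma loc_lipschitz2_continuous_l K : loc_lipschitz2 K ->
  forall x0 t0, continuous (fun x => K x t0) x0.
Proof.
  intros HK x0 t0. exact (loc_lipschitz2_continuous_r _ (loc_lipschitz2_swap K HK) t0 x0).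
Qed.

Lemma loc_lipschitz2_continuity_2d K : loc_lipschitz2 K ->
  forall x0 t0, continuity_2d_pt K x0 t0.
Proof.
  intros HK x0 t0 eps. destruct (loc_lipschitz2_near K HK x0 t0) as [L [HL Hl]].
  pose proof (cond_pos eps).
  assert (Hd : 0 < Rmin 1 (eps / (2 * L + 1)))
    by (apply Rmin_pos; [lra | apply Rdiv_lt_0_compat; lra]).
  exists (mkposreal _ Hd). simpl. intros u v Hu Hv.
  pose proof (Rmin_l 1 (eps / (2 * L + 1))). pose proof (Rmin_r 1 (eps / (2 * L + 1))).
  eapply Rle_lt_trans; [apply Hl; try lra; rewrite Rminus_diag, Rabs_R0; lra|].
  apply Rle_lt_trans with (L * (2 * (eps / (2 * L + 1)))); [apply Rmult_le_compat_l; lra|].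
  replace (L * (2 * (eps / (2 * L + 1)))) with (eps * (2 * L / (2 * L + 1))) by (field; lra).
  rewrite <- (Rmult_1_r eps) at 2. apply Rmult_lt_compat_l; auto.
  apply Rmult_lt_reg_r with (2 * L + 1); [lra|]. field_simplify; lra.
Qed.

Definition disp_int (k : nat) (H : R -> R -> R) (y c : R) : R :=
  iint k (fun q => H y (edisp k q + c)).

Lemma disp_int_0 H y c : disp_int 0 H y c = H y (0 + c).
Proof. reflexivity. Qed.

Lemma disp_int_S k H y c :
  disp_int (S k) H y c = RInt (fun x => disp_int k H y (edisp1 x + c)) (-/2) (/2).
Proof.
  unfold disp_int. simpl iint. apply RInt_ext. intros x _.
  f_equal. apply functional_extensionality. intros q.
  change (H y (edisp (S k) (set_coord q k x) + c) = H y (edisp k q + (edisp1 x + c))).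
  rewrite edisp_S_set_coord. f_equal. ring.
Qed.

Lemma slice_lipschitz F : loc_lipschitz2 F -> forall y c, exists L, forall a b,
  Rabs (F y (edisp1 a + c) - F y (edisp1 b + c)) <= L * Rabs (a - b).
Proof.
  intros HF y c. pose proof (Rabs_pos y); pose proof (Rabs_pos c).
  destruct (HF (Rabs y + Rabs c + 2)) as [L [HL HLip]]; [lra|].
  exists (L * (2 * PI)). intros a b.
  assert (Hr : forall z, Rabs (edisp1 z + c) <= Rabs y + Rabs c + 2).
  { intros z. pose proof (edisp1_bounds z).
    eapply Rle_trans; [apply Rabs_triang|]. rewrite (Rabs_right (edisp1 z)); lra. }
  eapply Rle_trans; [apply HLip; auto; lra|].
  rewrite Rminus_diag, Rabs_R0, Rplus_0_l.
  replace (edisp1 a + c - (edisp1 b + c)) with (edisp1 a - edisp1 b) by ring.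
  rewrite Rmult_assoc. apply Rmult_le_compat_l; auto. apply edisp1_lipschitz.
Qed.

Lemma slice_continuous F : loc_lipschitz2 F ->
  forall y c x, continuous (fun x => F y (edisp1 x + c)) x.
Proof.
  intros HF y c. destruct (slice_lipschitz F HF y c) as [L HL].
  apply lipschitz_continuous with L. apply HL.
Qed.

Lemma ex_RInt_slice F : loc_lipschitz2 F ->
  forall y c a b, ex_RInt (fun x => F y (edisp1 x + c)) a b.
Proof. intros. apply ex_RInt_cont, slice_continuous; auto. Qed.

Lemma disp_int_loc_lipschitz2 k H : loc_lipschitz2 H -> loc_lipschitz2 (disp_int k H).
Proof.
  revert H; induction k as [|k IH]; intros H HH r Hr.
  - destruct (HH r Hr) as [L [HL HLip]]. exists L; split; auto.
    intros. rewrite !disp_int_0, !Rplus_0_l. apply HLip; auto.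
  - destruct (IH H HH (r + 2)) as [L [HL HLip]]; [lra|].
    exists L; split; auto. intros y y' e e' Hy Hy' He He'.
    rewrite !disp_int_S, <- RInt_sub by (apply ex_RInt_slice, IH; auto).
    assert (Hb : forall x, Rabs (disp_int k H y (edisp1 x + e) - disp_int k H y' (edisp1 x + e'))
                 <= L * (Rabs (y - y') + Rabs (e - e'))).
    { intros x. pose proof (edisp1_bounds x).
      replace (e - e') with ((edisp1 x + e) - (edisp1 x + e')) by ring.
      apply HLip; try lra;
      (eapply Rle_trans; [apply Rabs_triang | rewrite (Rabs_right (edisp1 x)); lra]). }
    eapply Rle_trans.
    + apply abs_RInt_le_abs_bound with (h := fun _ => L * (Rabs (y - y') + Rabs (e - e')));
        [lra | apply ex_RInt_sub; apply ex_RInt_slice, IH; auto | apply ex_RInt_const |].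
      intros; apply Hb.
    + rewrite RInt_const_R. lra.
Qed.

Lemma disp_int_lin k H1 H2 al be : loc_lipschitz2 H1 -> loc_lipschitz2 H2 -> forall y c,
  disp_int k (fun y e => al * H1 y e + be * H2 y e) y c
  = al * disp_int k H1 y c + be * disp_int k H2 y c.
Proof.
  revert H1 H2; induction k as [|k IH]; intros H1 H2 L1 L2 y c; [reflexivity|].
  rewrite !disp_int_S, <- RInt_lin by (apply ex_RInt_slice, disp_int_loc_lipschitz2; auto).
  apply RInt_ext. intros x _. apply IH; auto.
Qed.

Lemma disp_int_le k H1 H2 : loc_lipschitz2 H1 -> loc_lipschitz2 H2 ->
  (forall y e, H1 y e <= H2 y e) -> forall y c, disp_int k H1 y c <= disp_int k H2 y c.
Proof.
  revert H1 H2; induction k as [|k IH]; intros H1 H2 L1 L2 Hle y c; [apply Hle|].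
  rewrite !disp_int_S. apply RInt_le; [lra| | |].
  1,2: apply ex_RInt_slice, disp_int_loc_lipschitz2; auto.
  intros x _. apply IH; auto.
Qed.

Lemma disp_int_const k m y c : disp_int k (fun _ _ => m) y c = m.
Proof.
  induction k as [|k IH]; [reflexivity|].
  rewrite disp_int_S, (RInt_ext _ (fun _ => m)), RInt_const_R; [lra|].
  intros; apply IH.
Qed.

Lemma disp_int_nonneg k H : loc_lipschitz2 H -> (forall y e, 0 <= H y e) ->
  forall y c, 0 <= disp_int k H y c.
Proof.
  intros HL H0 y c. rewrite <- (disp_int_const k 0 y c).
  apply disp_int_le; auto. apply loc_lipschitz2_const.
Qed.

Lemma disp_int_bound k H M : loc_lipschitz2 H -> (forall y e, Rabs (H y e) <= M) ->
  forall y c, Rabs (disp_int k H y c) <= M.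
Proof.
  intros HL HM y c. apply Rabs_le. split.
  - rewrite <- (disp_int_const k (-M) y c). apply disp_int_le; auto; [apply loc_lipschitz2_const|].
    intros y0 e. pose proof (HM y0 e) as Hm. apply Rabs_le_between in Hm. lra.
  - rewrite <- (disp_int_const k M y c). apply disp_int_le; auto; [apply loc_lipschitz2_const|].
    intros y0 e. pose proof (HM y0 e) as Hm. apply Rabs_le_between in Hm. lra.
Qed.

Lemma abs_le_of_between t u v : Rmin u v <= t <= Rmax u v -> Rabs t <= Rabs u + Rabs v.
Proof.
  intros Ht. apply Rabs_le.
  pose proof (Rabs_pos u); pose proof (Rabs_pos v).
  pose proof (Rle_abs u); pose proof (Rle_abs v);
  pose proof (Rabs_maj2 u); pose proof (Rabs_maj2 v).
  unfold Rmin, Rmax in Ht; destruct Rle_dec; lra.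
Qed.

Lemma continuous_RInt_param K : loc_lipschitz2 K -> forall c s x0,
  continuous (fun x => RInt (fun t => K x t) c s) x0.
Proof.
  intros HK c s x0.
  pose proof (Rabs_pos x0); pose proof (Rabs_pos c); pose proof (Rabs_pos s).
  destruct (HK (Rabs x0 + 1 + Rabs c + Rabs s)) as [L [HL Hl]]; [lra|].
  apply continuous_of_lipschitz_at with (Rabs (s - c) * L). intros a Ha.
  rewrite Rmult_assoc. apply RInt_diff_bound.
  1,2: apply ex_RInt_cont; intros; apply loc_lipschitz2_continuous_r; auto.
  intros t Ht. pose proof (abs_le_of_between t c s Ht).
  pose proof (Rabs_triang_inv a x0).
  eapply Rle_trans; [apply Hl; lra|].
  rewrite Rminus_diag, Rabs_R0, Rplus_0_r. lra.
Qed.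

Lemma RInt_exchange K a b c d : loc_lipschitz2 K ->
  RInt (fun x => RInt (fun t => K x t) c d) a b
  = RInt (fun t => RInt (fun x => K x t) a b) c d.
Proof.
  intros HK.
  pose (G := fun s => (RInt (fun x => K x s) a b : R)).
  pose (f := fun u x => (RInt (fun t => K x t) c u : R)).
  pose (A := fun s => (RInt (fun x => f s x) a b : R)).
  pose (B := fun s => (RInt G c s : R)).
  assert (HG : forall s, continuous G s)
    by (intros s; apply (continuous_RInt_param (fun t x => K x t)), loc_lipschitz2_swap; auto).
  assert (Hf : forall x u, is_derive (fun u => f u x) u (K x u)).
  { intros x u. apply (is_derive_RInt (fun t => K x t) (fun u => RInt (fun t => K x t) c u) c).
    - apply filter_forall. intros b0. apply (RInt_correct (V := R_CompleteNormedModule)).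
      apply ex_RInt_cont. intros; apply loc_lipschitz2_continuous_r; auto.
    - apply loc_lipschitz2_continuous_r; auto. }
  assert (HB : forall s, is_derive B s (G s)).
  { intros s. apply (is_derive_RInt G (fun s => RInt G c s) c); auto.
    apply filter_forall. intros b0.
    apply (RInt_correct (V := R_CompleteNormedModule)), ex_RInt_cont; auto. }
  assert (HA : forall s, is_derive A s (G s)).
  { intros s.
    assert (E : RInt (fun t => Derive (fun u => f u t) s) a b = G s).
    { apply RInt_ext. intros x _. apply is_derive_unique, Hf. }
    rewrite <- E. apply (is_derive_RInt_param f a b s).
    - apply filter_forall. intros x0 t _. eexists; apply Hf.
    - intros t _. apply continuity_2d_pt_ext with (fun u v => K v u).
      + intros; symmetry; apply is_derive_unique, Hf.
      + apply loc_lipschitz2_continuity_2d, loc_lipschitz2_swap; auto.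
    - apply filter_forall. intros y. apply ex_RInt_cont. intros x.
      apply continuous_RInt_param; auto. }
  assert (HD : forall s, is_derive (fun s => A s - B s) s 0).
  { intros s. replace 0 with (G s - G s) by ring. apply (is_derive_minus A B); auto. }
  assert (Hc : A c - B c = 0).
  { unfold A, B, f. rewrite (RInt_point c G), (RInt_ext _ (fun _ => 0)), RInt_const_R.
    - change (zero : R) with 0. ring.
    - intros x _. rewrite RInt_point. reflexivity. }
  pose proof (lipschitz_of_derive_bound (fun s => A s - B s) (fun _ => 0) 0 HD) as Hl.
  specialize (Hl ltac:(intros; simpl; rewrite Rabs_R0; lra) d c).
  rewrite Rmult_0_l, Hc, Rminus_0_r in Hl.
  assert (A d - B d = 0) by (pose proof (Rabs_pos (A d - B d)); apply Rabs_eq_0; lra).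
  unfold A, B, f, G in *. lra.
Qed.

Lemma loc_lipschitz2_RInt_param H T : loc_lipschitz2 H ->
  loc_lipschitz2 (fun (_ : R) e => RInt (fun t => H t e) 0 T).
Proof.
  intros HH r Hr. pose proof (Rabs_pos T).
  destruct (HH (r + Rabs T)) as [L [HL Hl]]; [lra|].
  exists (Rabs T * L). split; [apply Rmult_le_pos; auto|].
  intros y y' e e' Hy Hy' He He'.
  apply Rle_trans with (Rabs (T - 0) * (L * Rabs (e - e'))).
  - apply RInt_diff_bound.
    1,2: apply ex_RInt_cont; intros; apply loc_lipschitz2_continuous_l; auto.
    intros t Ht. pose proof (abs_le_of_between t 0 T Ht) as Hbt. rewrite Rabs_R0 in Hbt.
    eapply Rle_trans; [apply Hl; lra|].
    rewrite Rminus_diag, Rabs_R0, Rplus_0_l. apply Rle_refl.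
  - rewrite Rminus_0_r, Rmult_assoc. apply Rmult_le_compat_l; [apply Rabs_pos|].
    apply Rmult_le_compat_l; auto. pose proof (Rabs_pos (y - y')); lra.
Qed.

Lemma loc_lipschitz2_slice_swap F c : loc_lipschitz2 F ->
  loc_lipschitz2 (fun x t => F t (edisp1 x + c)).
Proof.
  intros HF r Hr. pose proof (Rabs_pos c). pose proof PI_RGT_0.
  destruct (HF (r + Rabs c + 2)) as [L [HL Hl]]; [lra|].
  exists (L * (2 * PI + 1)). split; [nra|].
  intros x x' t t' Hx Hx' Ht Ht'.
  assert (Hr2 : forall z, Rabs (edisp1 z + c) <= r + Rabs c + 2).
  { intros z. pose proof (edisp1_bounds z).
    eapply Rle_trans; [apply Rabs_triang|]. rewrite (Rabs_right (edisp1 z)); lra. }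
  eapply Rle_trans; [apply Hl; auto; lra|].
  replace (edisp1 x + c - (edisp1 x' + c)) with (edisp1 x - edisp1 x') by ring.
  pose proof (edisp1_lipschitz x x').
  pose proof (Rabs_pos (x - x')). pose proof (Rabs_pos (t - t')).
  rewrite Rmult_assoc. apply Rmult_le_compat_l; auto. nra.
Qed.

Lemma disp_int_RInt k H T : loc_lipschitz2 H -> forall c,
  disp_int k (fun _ e => RInt (fun t => H t e) 0 T) 0 c = RInt (fun t => disp_int k H t c) 0 T.
Proof.
  revert H; induction k as [|k IH]; intros H HH c; [reflexivity|].
  rewrite disp_int_S.
  rewrite (RInt_ext _ (fun x => RInt (fun t => disp_int k H t (edisp1 x + c)) 0 T))
    by (intros; apply IH; auto).
  rewrite (RInt_exchange (fun x t => disp_int k H t (edisp1 x + c)))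
    by (apply loc_lipschitz2_slice_swap, disp_int_loc_lipschitz2; auto).
  apply RInt_ext. intros t _. rewrite disp_int_S. reflexivity.
Qed.

(** * One-dimensional oscillatory integrals *)

Lemma RInt_abs_const_sign (f : R -> R) a b : a <= b -> ex_RInt f a b ->
  (forall x, a <= x <= b -> 0 <= f x) \/ (forall x, a <= x <= b -> f x <= 0) ->
  RInt (fun x => Rabs (f x)) a b = Rabs (RInt f a b).
Proof.
  intros Hab Hf [Hs|Hs].
  - rewrite Rabs_right by (apply Rle_ge, RInt_ge_0; auto; intros; apply Hs; lra).
    apply RInt_ext. intros x Hx. rewrite Rmin_left, Rmax_right in Hx by lra.
    apply Rabs_right, Rle_ge, Hs; lra.
  - assert (RInt f a b <= 0).
    { rewrite <- (Rmult_0_r (b - a)), <- RInt_const_R.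
      apply RInt_le; auto; [apply ex_RInt_const|]. intros; apply Hs; lra. }
    rewrite Rabs_left1 by auto.
    rewrite (RInt_ext _ (fun x => opp (f x))).
    + rewrite (RInt_opp (V := R_CompleteNormedModule)) by auto. reflexivity.
    + intros x Hx. rewrite Rmin_left, Rmax_right in Hx by lra.
      apply Rabs_left1, Hs; lra.
Qed.

Lemma abs_RInt_mul_const_sign (Phi dw : R -> R) a b : a <= b ->
  ex_RInt dw a b -> ex_RInt (fun x => Phi x * dw x) a b ->
  (forall x, Rabs (Phi x) <= 1) ->
  ((forall x, a <= x <= b -> 0 <= dw x) \/ (forall x, a <= x <= b -> dw x <= 0)) ->
  Rabs (RInt (fun x => Phi x * dw x) a b) <= Rabs (RInt dw a b).
Proof.
  intros Hab Hdw HPdw HP Hs. rewrite <- (RInt_abs_const_sign dw) by auto.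
  apply abs_RInt_le_abs_bound; auto.
  - apply (ex_RInt_norm dw a b Hdw).
  - intros x _. rewrite Rabs_mult. pose proof (HP x). pose proof (Rabs_pos (dw x)). nra.
Qed.

(* Van der Corput's lemma: integrate by parts and use that [w] is monotone. *)
Lemma abs_RInt_ibp_bound (Phi dPhi w dw : R -> R) a b : a <= b ->
  (forall x, a <= x <= b -> is_derive Phi x (dPhi x)) ->
  (forall x, a <= x <= b -> is_derive w x (dw x)) ->
  (forall x, a <= x <= b -> continuous dPhi x) ->
  (forall x, a <= x <= b -> continuous dw x) ->
  (forall x, Rabs (Phi x) <= 1) ->
  ((forall x, a <= x <= b -> 0 <= dw x) \/ (forall x, a <= x <= b -> dw x <= 0)) ->
  Rabs (RInt (fun x => dPhi x * w x) a b) <= 2 * (Rabs (w a) + Rabs (w b)).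
Proof.
  intros Hab HdP Hdw HcP Hcw HP Hsgn.
  assert (Hmm : forall x, Rmin a b <= x <= Rmax a b -> a <= x <= b)
    by (intros x; rewrite Rmin_left, Rmax_right; lra).
  assert (HcPhi : forall x, a <= x <= b -> continuous Phi x)
    by (intros; apply (ex_derive_continuous (V := R_NormedModule)); eexists; apply HdP; auto).
  assert (Hcwx : forall x, a <= x <= b -> continuous w x)
    by (intros; apply (ex_derive_continuous (V := R_NormedModule)); eexists; apply Hdw; auto).
  assert (I1 : is_RInt (fun x => dPhi x * w x + Phi x * dw x) a b (Phi b * w b - Phi a * w a)).
  { apply (is_RInt_derive (V := R_CompleteNormedModule) (fun x => Phi x * w x)).
    - intros x Hx. apply Hmm in Hx. apply (is_derive_mult Phi w); auto.
      intros; apply Rmult_comm.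
    - intros x Hx. apply Hmm in Hx.
      apply (continuous_plus (fun x => dPhi x * w x) (fun x => Phi x * dw x));
      apply (continuous_mult (K := R_AbsRing)); auto. }
  assert (I2 : is_RInt dw a b (w b - w a))
    by (apply (is_RInt_derive (V := R_CompleteNormedModule) w); intros; [apply Hdw | apply Hcw]; auto).
  assert (E2 : ex_RInt (fun x => Phi x * dw x) a b).
  { apply (ex_RInt_continuous (V := R_CompleteNormedModule)). intros x Hx; apply Hmm in Hx.
    apply (continuous_mult (K := R_AbsRing)); auto. }
  rewrite (RInt_ext _ (fun x => (dPhi x * w x + Phi x * dw x) - Phi x * dw x)) by (intros; (change_eq_R; ring)).
  rewrite RInt_sub by (try assumption; eexists; eassumption).
  rewrite (is_RInt_unique _ _ _ _ I1).
  pose proof (abs_RInt_mul_const_sign Phi dw a b Hab (ex_intro _ _ I2) E2 HP Hsgn) as B.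
  rewrite (is_RInt_unique _ _ _ _ I2) in B.
  pose proof (HP a). pose proof (HP b).
  pose proof (Rabs_pos (w a)); pose proof (Rabs_pos (w b)).
  assert (Rabs (Phi b * w b - Phi a * w a) <= Rabs (w b) + Rabs (w a)).
  { eapply Rle_trans; [apply Rabs_triang|]. rewrite Rabs_Ropp, !Rabs_mult. nra. }
  pose proof (Rabs_triang (w b) (- w a)) as Hw. rewrite Rabs_Ropp in Hw.
  pose proof (Rabs_triang (Phi b * w b - Phi a * w a) (- RInt (fun x => Phi x * dw x) a b)) as Ht.
  rewrite Rabs_Ropp in Ht. unfold Rminus in *. lra.
Qed.

Definition osc_weight (t x : R) : R := / (2 * PI * t * sin (2 * PI * x)).

Lemma osc_weight_le t x m : 0 < t -> 0 < m -> m <= sin (2 * PI * x) ->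
  Rabs (osc_weight t x) <= / (2 * PI * t * m).
Proof.
  intros Ht Hm Hs. unfold osc_weight.
  assert (0 < 2 * PI * t) by (pose proof PI_RGT_0; apply Rmult_lt_0_compat; lra).
  rewrite Rabs_inv, Rabs_right by (apply Rle_ge, Rmult_le_pos; lra).
  apply Rinv_le_contravar; [apply Rmult_lt_0_compat; lra|]. apply Rmult_le_compat_l; lra.
Qed.

(* The phase [t * edisp1 x] has derivative [t * 2 PI sin (2 PI x)], so dividing by it
   writes the integrand as a derivative times [osc_weight], whose monotonicity on
   [a, b] is governed by the sign of the cosine. *)
Lemma abs_RInt_osc_piece t th a b m : 0 < t -> 0 < m -> 0 < a -> a <= b -> b < /2 ->
  ((forall x, a <= x <= b -> 0 <= cos (2 * PI * x)) \/
   (forall x, a <= x <= b -> cos (2 * PI * x) <= 0)) ->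
  m <= sin (2 * PI * a) -> m <= sin (2 * PI * b) ->
  Rabs (RInt (fun x => cos (t * edisp1 x + th)) a b) <= 2 / (PI * t * m).
Proof.
  intros Ht Hm Ha Hab Hb Hc Hma Hmb. pose proof PI_RGT_0.
  assert (Hsin : forall x, a <= x <= b -> 0 < sin (2 * PI * x))
    by (intros; apply sin_gt_0; nra).
  assert (Hden : forall x, a <= x <= b -> 0 < 2 * PI * t * sin (2 * PI * x))
    by (intros x Hx; pose proof (Hsin x Hx); apply Rmult_lt_0_compat; nra).
  set (dW := fun x => - (2 * PI * t * (2 * PI * cos (2 * PI * x)))
                       * / (2 * PI * t * sin (2 * PI * x)) ^ 2).
  rewrite (RInt_ext _ (fun x => (cos (t * edisp1 x + th) * (t * (2 * PI * sin (2 * PI * x))))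
                                * osc_weight t x)).
  2: { intros x Hx. rewrite Rmin_left, Rmax_right in Hx by lra.
       pose proof (Hden x ltac:(lra)). unfold osc_weight. change_eq_R. field. nra. }
  eapply Rle_trans.
  - apply (abs_RInt_ibp_bound (fun x => sin (t * edisp1 x + th)) _ (osc_weight t) dW); auto.
    + intros x _. unfold edisp1. auto_derive; auto. unfold Rminus. ring.
    + intros x Hx. pose proof (Hden x Hx). pose proof (Hsin x Hx). unfold osc_weight, dW.
      auto_derive; [lra|]. field. repeat split; lra.
    + intros x _. apply (ex_derive_continuous (V := R_NormedModule)).
      unfold edisp1. auto_derive. auto.
    + intros x Hx. pose proof (Hden x Hx). unfold dW.
      apply (ex_derive_continuous (V := R_NormedModule)). auto_derive.
      rewrite Rmult_1_r. apply Rgt_not_eq, Rmult_lt_0_compat; lra.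
    + intros x. pose proof (SIN_bound (t * edisp1 x + th)). apply Rabs_le; lra.
    + assert (Hpos : forall x, a <= x <= b -> 0 < / (2 * PI * t * sin (2 * PI * x)) ^ 2)
        by (intros x Hx; apply Rinv_0_lt_compat, pow_lt, Hden; auto).
      assert (0 < 2 * PI * t) by (apply Rmult_lt_0_compat; lra).
      assert (0 < 2 * PI * t * (2 * PI)) by (apply Rmult_lt_0_compat; lra).
      assert (HdW : forall x, dW x = (2 * PI * t * (2 * PI))
                * (- cos (2 * PI * x) * / (2 * PI * t * sin (2 * PI * x)) ^ 2))
        by (intros; unfold dW; ring).
      destruct Hc as [Hc|Hc]; [right|left]; intros x Hx; rewrite HdW;
        pose proof (Hpos x Hx); pose proof (Hc x Hx).
      * assert (- cos (2 * PI * x) * / (2 * PI * t * sin (2 * PI * x)) ^ 2 <= 0) by nra. nra.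
      * assert (0 <= - cos (2 * PI * x) * / (2 * PI * t * sin (2 * PI * x)) ^ 2) by nra. nra.
  - pose proof (osc_weight_le t a m Ht Hm Hma). pose proof (osc_weight_le t b m Ht Hm Hmb).
    replace (2 / (PI * t * m)) with (2 * (/ (2 * PI * t * m) + / (2 * PI * t * m)))
      by (field; nra).
    lra.
Qed.

Lemma edisp1_opp x : edisp1 (- x) = edisp1 x.
Proof.
  unfold edisp1. replace (2 * PI * - x) with (- (2 * PI * x)) by ring.
  rewrite cos_neg. reflexivity.
Qed.

Lemma RInt_edisp1_sym (F : R -> R) : (forall x, continuous F x) ->
  RInt (fun x => F (edisp1 x)) (-/2) (/2) = 2 * RInt (fun x => F (edisp1 x)) 0 (/2).
Proof.
  intros HF. set (f := fun x => F (edisp1 x)).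
  assert (Hf : forall x, continuous f x)
    by (intros; apply (continuous_comp edisp1 F); [apply edisp1_continuous | apply HF]).
  pose proof (RInt_comp_lin f (-1) 0 0 (/2) (ex_RInt_cont f _ _ Hf)) as E.
  rewrite (RInt_ext _ (fun y => opp (f y))) in E.
  2: { intros y _. unfold f. change (-1 * F (edisp1 (-1 * y + 0)) = - F (edisp1 y)).
       replace (-1 * y + 0) with (- y) by ring. rewrite edisp1_opp. ring. }
  rewrite (RInt_opp (V := R_CompleteNormedModule)) in E by (apply ex_RInt_cont; auto).
  replace (-1 * 0 + 0) with 0 in E by ring. replace (-1 * / 2 + 0) with (- / 2) in E by ring.
  rewrite <- (opp_RInt_swap f (-/2) 0) in E by (apply ex_RInt_cont; auto).
  change (- RInt f 0 (/2) = - RInt f (-/2) 0) in E.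
  rewrite (RInt_Chasles_cont f (-/2) 0 (/2)) by auto. lra.
Qed.

Lemma abs_RInt_osc_half t th dl : 0 < t -> 0 < dl <= /8 ->
  Rabs (RInt (fun x => cos (t * edisp1 x + th)) 0 (/2)) <= 2 * dl + 6 / (PI * PI * t * dl).
Proof.
  intros Ht Hdl. pose proof PI_ge_3. pose proof PI_4.
  set (f := fun x => cos (t * edisp1 x + th)).
  assert (Hfc : forall x, continuous f x)
    by (intros; apply (ex_derive_continuous (V := R_NormedModule)); unfold f, edisp1;
        auto_derive; auto).
  assert (Hf1 : forall x, Rabs (f x) <= 1)
    by (intros x; unfold f; apply Rabs_le; pose proof (COS_bound (t * edisp1 x + th)); lra).
  set (m := 2 * PI * dl / 3).
  assert (Hm : 0 < m) by (unfold m; nra).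
  assert (Hmdl : m <= sin (2 * PI * dl)) by (apply sin_ge_third; nra).
  assert (Hm1 : m <= sin (2 * PI * /4))
    by (replace (2 * PI * /4) with (PI / 2) by field; rewrite sin_PI2; unfold m; nra).
  assert (Hmdl' : m <= sin (2 * PI * (/2 - dl)))
    by (replace (2 * PI * (/2 - dl)) with (PI - 2 * PI * dl) by field; rewrite sin_PI_x; auto).
  assert (HB : 2 / (PI * t * m) = 3 / (PI * PI * t * dl)) by (unfold m; field; lra).
  assert (P1 : Rabs (RInt f dl (/4)) <= 3 / (PI * PI * t * dl)).
  { rewrite <- HB. apply abs_RInt_osc_piece; try lra.
    left. intros x Hx. apply cos_ge_0; nra. }
  assert (P2 : Rabs (RInt f (/4) (/2 - dl)) <= 3 / (PI * PI * t * dl)).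
  { rewrite <- HB. apply abs_RInt_osc_piece; try lra.
    right. intros x Hx. apply cos_le_0; nra. }
  pose proof (abs_RInt_le_length f 0 dl ltac:(lra) Hfc Hf1) as P0.
  pose proof (abs_RInt_le_length f (/2 - dl) (/2) ltac:(lra) Hfc Hf1) as P3.
  change (Rabs (RInt f 0 (/2)) <= 2 * dl + 6 / (PI * PI * t * dl)).
  rewrite (RInt_Chasles_cont f 0 dl), (RInt_Chasles_cont f dl (/4)),
    (RInt_Chasles_cont f (/4) (/2 - dl)) by auto.
  pose proof (Rabs_triang (RInt f 0 dl)
    (RInt f dl (/4) + (RInt f (/4) (/2 - dl) + RInt f (/2 - dl) (/2)))).
  pose proof (Rabs_triang (RInt f dl (/4)) (RInt f (/4) (/2 - dl) + RInt f (/2 - dl) (/2))).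
  pose proof (Rabs_triang (RInt f (/4) (/2 - dl)) (RInt f (/2 - dl) (/2))).
  replace (6 / (PI * PI * t * dl)) with (3 / (PI * PI * t * dl) + 3 / (PI * PI * t * dl))
    by (unfold Rdiv; ring).
  lra.
Qed.

Lemma osc_phase_decay t th : 1 <= t ->
  Rabs (RInt (fun x => cos (t * edisp1 x + th)) (-/2) (/2)) <= 12 / sqrt t.
Proof.
  intros Ht. pose proof PI_ge_3 as Hpi.
  assert (Hst : 1 <= sqrt t) by (rewrite <- sqrt_1; apply sqrt_le_1_alt; lra).
  assert (Hsq : sqrt t * sqrt t = t) by (apply sqrt_sqrt; lra).
  set (dl := / (8 * sqrt t)).
  assert (Hdl : 0 < dl <= /8)
    by (split; [apply Rinv_0_lt_compat | apply Rinv_le_contravar]; lra).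
  rewrite (RInt_edisp1_sym (fun u => cos (t * u + th)))
    by (intros; apply (ex_derive_continuous (V := R_NormedModule)); auto_derive; auto).
  rewrite Rabs_mult, (Rabs_right 2) by lra.
  eapply Rle_trans; [apply Rmult_le_compat_l, (abs_RInt_osc_half t th dl); lra|].
  assert (Htdl : t * dl = sqrt t / 8) by (unfold dl; rewrite <- Hsq at 1; field; lra).
  replace (PI * PI * t * dl) with (PI * PI * (sqrt t / 8)) by (rewrite <- Htdl; ring).
  pose proof (Rmult_le_compat 3 PI 3 PI ltac:(lra) ltac:(lra) Hpi Hpi).
  apply Rmult_le_reg_r with (PI * PI * sqrt t); [nra|].
  replace (2 * (2 * dl + 6 / (PI * PI * (sqrt t / 8))) * (PI * PI * sqrt t))
    with (PI * PI / 2 + 96) by (unfold dl; field; lra).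
  replace (12 / sqrt t * (PI * PI * sqrt t)) with (12 * (PI * PI)) by (field; lra).
  lra.
Qed.

(** * Decay of the torus average of a wave *)

Definition wave (t y e : R) : R := sin (y - t * e).

Definition osc_size (t : R) : R :=
  Rabs (RInt (fun x => cos (t * edisp1 x)) (-/2) (/2))
  + Rabs (RInt (fun x => sin (t * edisp1 x)) (-/2) (/2)).

Lemma loc_lipschitz2_phase (h : R -> R) t :
  (forall a b, Rabs (h a - h b) <= Rabs (a - b)) -> loc_lipschitz2 (fun y e => h (y - t * e)).
Proof.
  intros Hh r Hr. pose proof (Rabs_pos t). exists (1 + Rabs t). split; [lra|].
  intros y y' e e' _ _ _ _. eapply Rle_trans; [apply Hh|].
  replace (y - t * e - (y' - t * e')) with ((y - y') + (- t) * (e - e')) by ring.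
  eapply Rle_trans; [apply Rabs_triang|]. rewrite Rabs_mult, Rabs_Ropp.
  pose proof (Rabs_pos (y - y')); pose proof (Rabs_pos (e - e')). nra.
Qed.

Lemma continuous_trig_phase t x :
  continuous (fun x => cos (t * edisp1 x)) x /\ continuous (fun x => sin (t * edisp1 x)) x.
Proof.
  split; apply (ex_derive_continuous (V := R_NormedModule)); unfold edisp1; auto_derive; auto.
Qed.

(* Expanding [sin (Y - t * edisp1 x)] in the last coordinate reduces the [S k]-fold
   integral to the [k]-fold one at the phases [y] and [y + PI/2]. *)
Lemma disp_int_wave_bound k t y c : Rabs (disp_int k (wave t) y c) <= osc_size t ^ k.
Proof.
  revert y c; induction k as [|k IH]; intros y c.
  - rewrite disp_int_0, pow_O. unfold wave.
    apply Rabs_le. pose proof (SIN_bound (y - t * (0 + c))). lra.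
  - assert (Hw := loc_lipschitz2_phase sin t sin_lipschitz).
    assert (Hc := loc_lipschitz2_phase cos t cos_lipschitz).
    assert (Hshift : disp_int k (fun y e => cos (y - t * e)) y c
                     = disp_int k (wave t) (y + PI / 2) c).
    { unfold disp_int, wave. f_equal. apply functional_extensionality. intros q.
      replace (y + PI / 2 - t * (edisp k q + c)) with (PI / 2 - - (y - t * (edisp k q + c)))
        by ring.
      rewrite sin_shift, cos_neg. reflexivity. }
    assert (Hx : forall x, disp_int k (wave t) y (edisp1 x + c)
                   = disp_int k (wave t) y c * cos (t * edisp1 x)
                     + (- disp_int k (wave t) (y + PI / 2) c) * sin (t * edisp1 x)).
    { intros x. rewrite <- Hshift.
      replace (disp_int k (wave t) y c * cos (t * edisp1 x)
               + - disp_int k (fun y e => cos (y - t * e)) y c * sin (t * edisp1 x))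
        with (cos (t * edisp1 x) * disp_int k (wave t) y c
              + (- sin (t * edisp1 x)) * disp_int k (fun y e => cos (y - t * e)) y c) by ring.
      rewrite <- disp_int_lin by auto.
      unfold disp_int, wave. f_equal. apply functional_extensionality. intros q.
      replace (y - t * (edisp k q + (edisp1 x + c)))
        with ((y - t * (edisp k q + c)) - t * edisp1 x) by ring.
      rewrite sin_minus. ring. }
    pose proof (IH y c). pose proof (IH (y + PI / 2) c).
    rewrite disp_int_S, (RInt_ext _ _ _ _ (fun x _ => Hx x)).
    rewrite (RInt_lin (fun x => cos (t * edisp1 x)) (fun x => sin (t * edisp1 x)))
      by (apply ex_RInt_cont; intros x; apply (continuous_trig_phase t x)).
    change (osc_size t ^ S k) with (osc_size t * osc_size t ^ k).
    eapply Rle_trans; [apply Rabs_triang|]. rewrite !Rabs_mult, Rabs_Ropp.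
    unfold osc_size at 1. set (M := osc_size t ^ k) in *.
    pose proof (Rabs_pos (RInt (fun x => cos (t * edisp1 x)) (-/2) (/2))).
    pose proof (Rabs_pos (RInt (fun x => sin (t * edisp1 x)) (-/2) (/2))).
    eapply Rle_trans; [apply Rplus_le_compat; apply Rmult_le_compat_r; eauto|]. lra.
Qed.

Lemma osc_size_le_2 t : osc_size t <= 2.
Proof.
  unfold osc_size.
  pose proof (abs_RInt_le_length (fun x => cos (t * edisp1 x)) (-/2) (/2) ltac:(lra)
    (fun x => proj1 (continuous_trig_phase t x))
    (fun x => ltac:(apply Rabs_le; pose proof (COS_bound (t * edisp1 x)); lra))).
  pose proof (abs_RInt_le_length (fun x => sin (t * edisp1 x)) (-/2) (/2) ltac:(lra)
    (fun x => proj2 (continuous_trig_phase t x))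
    (fun x => ltac:(apply Rabs_le; pose proof (SIN_bound (t * edisp1 x)); lra))).
  lra.
Qed.

Lemma osc_size_decay t : 1 <= t -> osc_size t <= 24 / sqrt t.
Proof.
  intros Ht. unfold osc_size.
  rewrite (RInt_ext (fun x => cos (t * edisp1 x)) (fun x => cos (t * edisp1 x + 0)))
    by (intros; rewrite Rplus_0_r; reflexivity).
  rewrite (RInt_ext (fun x => sin (t * edisp1 x)) (fun x => cos (t * edisp1 x + - (PI / 2)))).
  - pose proof (osc_phase_decay t 0 Ht). pose proof (osc_phase_decay t (- (PI / 2)) Ht).
    replace (24 / sqrt t) with (12 / sqrt t + 12 / sqrt t) by (unfold Rdiv; ring). lra.
  - intros x _. rewrite <- cos_shift, <- cos_neg. f_equal. ring.
Qed.

Definition wave_const (d : nat) : R := 24 ^ 3 * 2 ^ (d - 3).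

Lemma disp_int_wave_decay d t y : (3 <= d)%nat -> 1 <= t ->
  Rabs (disp_int d (wave t) y 0) <= wave_const d / (t * sqrt t).
Proof.
  intros Hd Ht. eapply Rle_trans; [apply disp_int_wave_bound|].
  assert (H0 : 0 <= osc_size t)
    by (unfold osc_size; apply Rplus_le_le_0_compat; apply Rabs_pos).
  assert (Hst : 1 <= sqrt t) by (rewrite <- sqrt_1; apply sqrt_le_1_alt; lra).
  assert (Hsq : sqrt t * sqrt t = t) by (apply sqrt_sqrt; lra).
  replace d with (3 + (d - 3))%nat by lia. rewrite pow_add. unfold wave_const.
  replace (3 + (d - 3) - 3)%nat with (d - 3)%nat by lia.
  assert (osc_size t ^ (d - 3) <= 2 ^ (d - 3))
    by (apply pow_incr; split; auto; apply osc_size_le_2).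
  assert (osc_size t ^ 3 <= (24 / sqrt t) ^ 3)
    by (apply pow_incr; split; auto; apply osc_size_decay; auto).
  assert (Ht3 : t * sqrt t = sqrt t ^ 3) by (rewrite <- Hsq at 1; ring).
  replace ((24 / sqrt t) ^ 3) with (24 ^ 3 / (t * sqrt t)) in * by (rewrite Ht3; field; lra).
  apply Rle_trans with (24 ^ 3 / (t * sqrt t) * 2 ^ (d - 3)).
  - apply Rmult_le_compat; auto using pow_le.
  - right. unfold Rdiv. ring.
Qed.

(** * Time representation of the resolvent *)

(* [res_profile eps phi a = ∫_0^∞ exp (- eps t) sin (a t + phi) dt]; the phases [0] and
   [- PI/2] give the real and imaginary parts of [1 / (a + i eps)]. *)
Definition res_profile (eps phi a : R) : R :=
  (eps * sin phi + a * cos phi) / (a ^ 2 + eps ^ 2).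

Definition damped_wave (al eps phi t e : R) : R := exp (- eps * t) * wave t (al * t + phi) e.

Lemma sum_sq_pos a eps : 0 < eps -> 0 < a ^ 2 + eps ^ 2.
Proof. intros He. pose proof (pow2_ge_0 a). pose proof (pow_lt eps 2 He). lra. Qed.

Lemma abs_2mul_le_sum_sq a b : Rabs (2 * a * b) <= a ^ 2 + b ^ 2.
Proof.
  apply Rabs_le. pose proof (pow2_ge_0 (a - b)). pose proof (pow2_ge_0 (a + b)). nra.
Qed.

Section ResolventTimeRepresentation.

Variables (al eps phi : R).
Hypothesis eps_pos : 0 < eps.

Lemma res_profile_lipschitz a b :
  Rabs (res_profile eps phi a - res_profile eps phi b) <= (2 / eps ^ 2) * Rabs (a - b).
Proof.
  apply lipschitz_of_derive_bound with (df := fun a =>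
    (cos phi * (a ^ 2 + eps ^ 2) - 2 * a * (eps * sin phi + a * cos phi)) / (a ^ 2 + eps ^ 2) ^ 2).
  - intros x. unfold res_profile. pose proof (sum_sq_pos x eps eps_pos). auto_derive; [lra|]. field. lra.
  - intros x. pose proof (sum_sq_pos x eps eps_pos) as Hd.
    assert (Hn : Rabs (cos phi * (x ^ 2 + eps ^ 2) - 2 * x * (eps * sin phi + x * cos phi))
                 <= 2 * (x ^ 2 + eps ^ 2)).
    { replace (cos phi * (x ^ 2 + eps ^ 2) - 2 * x * (eps * sin phi + x * cos phi))
        with (cos phi * (eps ^ 2 - x ^ 2) - (2 * x * eps) * sin phi) by ring.
      eapply Rle_trans; [apply Rabs_triang|].
      rewrite Rabs_Ropp, (Rabs_mult (cos phi)), (Rabs_mult (2 * x * eps)).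
      assert (Rabs (cos phi) <= 1) by (apply Rabs_le, COS_bound).
      assert (Rabs (sin phi) <= 1) by (apply Rabs_le, SIN_bound).
      assert (Rabs (eps ^ 2 - x ^ 2) <= x ^ 2 + eps ^ 2) by (apply Rabs_le; nra).
      pose proof (abs_2mul_le_sum_sq x eps).
      pose proof (Rabs_pos (cos phi)). pose proof (Rabs_pos (sin phi)).
      pose proof (Rabs_pos (eps ^ 2 - x ^ 2)). pose proof (Rabs_pos (2 * x * eps)).
      apply Rle_trans with (1 * (x ^ 2 + eps ^ 2) + (x ^ 2 + eps ^ 2) * 1); [|lra].
      apply Rplus_le_compat; apply Rmult_le_compat; auto. }
    unfold Rdiv. rewrite Rabs_mult, Rabs_inv, (Rabs_right ((x ^ 2 + eps ^ 2) ^ 2))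
      by (apply Rle_ge, pow_le; lra).
    apply Rle_trans with (2 * (x ^ 2 + eps ^ 2) * / (x ^ 2 + eps ^ 2) ^ 2).
    + apply Rmult_le_compat_r; [apply Rlt_le, Rinv_0_lt_compat, pow_lt; lra | auto].
    + replace (2 * (x ^ 2 + eps ^ 2) * / (x ^ 2 + eps ^ 2) ^ 2)
        with (2 * / (x ^ 2 + eps ^ 2)) by (field; lra).
      apply Rmult_le_compat_l; [lra|]. apply Rinv_le_contravar; nra.
Qed.

Lemma loc_lipschitz2_res_profile : loc_lipschitz2 (fun _ e => res_profile eps phi (al - e)).
Proof.
  apply loc_lipschitz2_of_lipschitz with (2 / eps ^ 2);
    [apply Rlt_le, Rdiv_lt_0_compat; nra|].
  intros a b. eapply Rle_trans; [apply res_profile_lipschitz|].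
  replace (al - a - (al - b)) with (- (a - b)) by ring. rewrite Rabs_Ropp. lra.
Qed.

Lemma loc_lipschitz2_wave_phase : loc_lipschitz2 (fun t e => wave t (al * t + phi) e).
Proof.
  intros r Hr. pose proof (Rabs_pos al). exists (Rabs al + 2 * r + 1). split; [lra|].
  intros y y' e e' Hy Hy' He He'. unfold wave. eapply Rle_trans; [apply sin_lipschitz|].
  replace (al * y + phi - y * e - (al * y' + phi - y' * e'))
    with (al * (y - y') - (y - y') * e - y' * (e - e')) by ring.
  eapply Rle_trans; [apply Rabs_triang|].
  eapply Rle_trans; [apply Rplus_le_compat_r, Rabs_triang|].
  repeat (rewrite Rabs_Ropp || rewrite Rabs_mult).
  pose proof (Rabs_pos (y - y')). pose proof (Rabs_pos (e - e')).
  pose proof (Rabs_pos e). pose proof (Rabs_pos y').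
  pose proof (Rmult_le_compat_l (Rabs (y - y')) _ _ H0 He).
  pose proof (Rmult_le_compat_r (Rabs (e - e')) _ _ H1 Hy'). nra.
Qed.

Lemma loc_lipschitz2_damped_wave : loc_lipschitz2 (damped_wave al eps phi).
Proof.
  intros r Hr. destruct (loc_lipschitz2_wave_phase r Hr) as [L [HL Hl]].
  pose proof (exp_pos (eps * r)).
  exists (exp (eps * r) * (eps + L)). split; [nra|].
  intros y y' e e' Hy Hy' He He'. unfold damped_wave.
  set (w := fun t e => wave t (al * t + phi) e).
  change (wave y (al * y + phi) e) with (w y e). change (wave y' (al * y' + phi) e') with (w y' e').
  replace (exp (- eps * y) * w y e - exp (- eps * y') * w y' e')
    with ((exp (- eps * y) - exp (- eps * y')) * w y e + exp (- eps * y') * (w y e - w y' e'))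
    by ring.
  eapply Rle_trans; [apply Rabs_triang|]. rewrite !Rabs_mult.
  assert (Hbd : forall z, Rabs z <= r -> - eps * z <= eps * r).
  { intros z Hz. pose proof (Rabs_maj2 z). nra. }
  assert (E1 : Rabs (exp (- eps * y) - exp (- eps * y')) <= exp (eps * r) * (eps * Rabs (y - y'))).
  { eapply Rle_trans; [apply exp_lipschitz_below; apply Hbd; auto|].
    replace (- eps * y - - eps * y') with (- eps * (y - y')) by ring.
    rewrite Rabs_mult, Rabs_Ropp, (Rabs_right eps) by lra. lra. }
  assert (E2 : Rabs (w y e) <= 1) by (apply Rabs_le, SIN_bound).
  assert (E3 : Rabs (exp (- eps * y')) <= exp (eps * r)).
  { rewrite Rabs_right by (apply Rle_ge, Rlt_le, exp_pos).
    destruct (Rle_lt_or_eq_dec _ _ (Hbd y' Hy')) as [Hlt|Heq];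
      [apply Rlt_le, exp_increasing; auto | rewrite Heq; lra]. }
  pose proof (Hl y y' e e' Hy Hy' He He').
  pose proof (Rabs_pos (y - y')). pose proof (Rabs_pos (e - e')). pose proof (Rabs_pos (w y e)).
  pose proof (Rabs_pos (exp (- eps * y'))). pose proof (Rabs_pos (w y e - w y' e')).
  apply Rle_trans with (exp (eps * r) * (eps * Rabs (y - y')) * 1
                        + exp (eps * r) * (L * (Rabs (y - y') + Rabs (e - e')))).
  - apply Rplus_le_compat; apply Rmult_le_compat; auto; apply Rabs_pos.
  - assert (0 <= exp (eps * r) * eps * Rabs (e - e')) by (apply Rmult_le_pos; nra).
    nra.
Qed.

Definition damped_wave_primitive (e t : R) : R :=
  exp (- eps * t) * ((- eps / ((al - e) ^ 2 + eps ^ 2)) * sin ((al - e) * t + phi)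
                     + (- (al - e) / ((al - e) ^ 2 + eps ^ 2)) * cos ((al - e) * t + phi)).

Lemma RInt_damped_wave T e :
  RInt (fun t => damped_wave al eps phi t e) 0 T
  = res_profile eps phi (al - e) + damped_wave_primitive e T.
Proof.
  pose proof (sum_sq_pos (al - e) eps eps_pos).
  assert (Hd : forall t, is_derive (damped_wave_primitive e) t (damped_wave al eps phi t e)).
  { intros t. unfold damped_wave_primitive, damped_wave, wave.
    auto_derive; [repeat split; lra|].
    replace (al * t + phi - t * e) with ((al - e) * t + phi) by ring. field. lra. }
  rewrite (is_RInt_unique _ _ _ _ (is_RInt_derive (V := R_CompleteNormedModule)
    (damped_wave_primitive e) (fun t => damped_wave al eps phi t e) 0 T
    (fun t _ => Hd t)
    (fun t _ => loc_lipschitz2_continuous_l _ loc_lipschitz2_damped_wave t e))).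
  unfold res_profile, damped_wave_primitive. simpl. unfold minus, plus, opp; simpl.
  replace ((al - e) * 0 + phi) with phi by ring. rewrite Rmult_0_r, exp_0.
  field. lra.
Qed.

Lemma damped_wave_primitive_bound e T :
  Rabs (damped_wave_primitive e T) <= 2 * exp (- eps * T) / eps.
Proof.
  unfold damped_wave_primitive. set (a := al - e).
  pose proof (sum_sq_pos a eps eps_pos) as Hden.
  rewrite Rabs_mult, (Rabs_right (exp _)) by (apply Rle_ge, Rlt_le, exp_pos).
  replace (2 * exp (- eps * T) / eps) with (exp (- eps * T) * (/ eps * 1 + / eps * 1))
    by (field; lra).
  apply Rmult_le_compat_l; [apply Rlt_le, exp_pos|].
  eapply Rle_trans; [apply Rabs_triang|]. rewrite !Rabs_mult.
  pose proof (Rabs_pos (sin (a * T + phi))). pose proof (Rabs_pos (cos (a * T + phi))).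
  assert (Rabs (sin (a * T + phi)) <= 1) by (apply Rabs_le, SIN_bound).
  assert (Rabs (cos (a * T + phi)) <= 1) by (apply Rabs_le, COS_bound).
  assert (Hq : forall z, Rabs z * eps <= a ^ 2 + eps ^ 2 ->
            Rabs (- z / (a ^ 2 + eps ^ 2)) <= / eps).
  { intros z Hz. unfold Rdiv.
    rewrite Rabs_mult, Rabs_Ropp, Rabs_inv, (Rabs_right (a ^ 2 + eps ^ 2)) by lra.
    apply Rmult_le_reg_r with ((a ^ 2 + eps ^ 2) * eps); [nra|].
    replace (Rabs z * / (a ^ 2 + eps ^ 2) * ((a ^ 2 + eps ^ 2) * eps)) with (Rabs z * eps)
      by (field; lra).
    replace (/ eps * ((a ^ 2 + eps ^ 2) * eps)) with (a ^ 2 + eps ^ 2) by (field; lra). auto. }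
  apply Rplus_le_compat; apply Rmult_le_compat; auto; try apply Rabs_pos; apply Hq.
  - rewrite Rabs_right by lra. nra.
  - pose proof (abs_2mul_le_sum_sq a eps) as Ha.
    rewrite !Rabs_mult, (Rabs_right 2), (Rabs_right eps) in Ha by lra.
    pose proof (Rabs_pos a). nra.
Qed.

Lemma loc_lipschitz2_damped_wave_primitive T :
  loc_lipschitz2 (fun _ e => damped_wave_primitive e T).
Proof.
  replace (fun (_ : R) e => damped_wave_primitive e T)
    with (fun (_ : R) e => 1 * RInt (fun t => damped_wave al eps phi t e) 0 T
                           + (-1) * res_profile eps phi (al - e)).
  - apply loc_lipschitz2_lin; [|apply loc_lipschitz2_res_profile].
    apply loc_lipschitz2_RInt_param, loc_lipschitz2_damped_wave.
  - do 2 (apply functional_extensionality; intros). rewrite RInt_damped_wave. ring.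
Qed.

(* Fubini turns the damped time integral of the resolvent profile into the time integral
   of the torus-averaged wave, up to the truncation error at time [T]. *)
Lemma disp_int_res_profile d T :
  disp_int d (fun _ e => res_profile eps phi (al - e)) 0 0
  = RInt (fun t => exp (- eps * t) * disp_int d (fun t e => wave t (al * t + phi) e) t 0) 0 T
    - disp_int d (fun _ e => damped_wave_primitive e T) 0 0.
Proof.
  replace (fun (_ : R) e => res_profile eps phi (al - e))
    with (fun (_ : R) e => 1 * RInt (fun t => damped_wave al eps phi t e) 0 T
                           + (-1) * damped_wave_primitive e T)
    by (do 2 (apply functional_extensionality; intros); rewrite RInt_damped_wave; ring).
  rewrite disp_int_lin by (apply loc_lipschitz2_RInt_param, loc_lipschitz2_damped_wave
                           || apply loc_lipschitz2_damped_wave_primitive).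
  rewrite disp_int_RInt by apply loc_lipschitz2_damped_wave.
  rewrite Rmult_1_l. unfold Rminus. f_equal; [|ring].
  apply RInt_ext. intros t _.
  pose proof (disp_int_lin d (fun t e => wave t (al * t + phi) e) (fun _ _ => 0)
    (exp (- eps * t)) 0 loc_lipschitz2_wave_phase (loc_lipschitz2_const 0) t 0) as E.
  rewrite Rmult_0_l, Rplus_0_r in E. rewrite <- E.
  unfold disp_int, damped_wave. f_equal. apply functional_extensionality. intros q. ring.
Qed.

End ResolventTimeRepresentation.

(** * Existence of Theta *)

Lemma is_RInt_pow_neg_3_2 K T0 T : 1 <= T0 <= T ->
  is_RInt (fun t => K / (t * sqrt t)) T0 T (2 * K / sqrt T0 - 2 * K / sqrt T).
Proof.
  intros HT.
  assert (E : minus ((fun t => - 2 * K / sqrt t) T) ((fun t => - 2 * K / sqrt t) T0)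
              = 2 * K / sqrt T0 - 2 * K / sqrt T).
  { unfold minus, plus, opp; simpl.
    assert (0 < sqrt T) by (apply sqrt_lt_R0; lra).
    assert (0 < sqrt T0) by (apply sqrt_lt_R0; lra). field. split; lra. }
  rewrite <- E.
  apply (is_RInt_derive (V := R_CompleteNormedModule) (fun t => - 2 * K / sqrt t)).
  - intros x Hx. rewrite Rmin_left, Rmax_right in Hx by lra.
    assert (0 < sqrt x) by (apply sqrt_lt_R0; lra).
    assert (sqrt x * sqrt x = x) by (apply sqrt_sqrt; lra).
    auto_derive; [lra|]. rewrite H0. field. split; lra.
  - intros x Hx. rewrite Rmin_left, Rmax_right in Hx by lra.
    assert (0 < sqrt x) by (apply sqrt_lt_R0; lra).
    apply (ex_derive_continuous (V := R_NormedModule)). auto_derive. split; [lra | nra].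
Qed.

Lemma exp_tail_small e T eta : 0 < e -> 0 < eta -> 16 / (e ^ 2 * eta) <= T ->
  2 * exp (- e * T) / e <= eta / 8.
Proof.
  intros He Heta HT.
  assert (He2 : 0 < e ^ 2 * eta) by (apply Rmult_lt_0_compat; [apply pow_lt|]; lra).
  assert (HT0 : 0 < T) by (eapply Rlt_le_trans; [|apply HT]; apply Rdiv_lt_0_compat; lra).
  assert (H16 : 16 <= e ^ 2 * eta * T).
  { apply Rmult_le_reg_r with (/ (e ^ 2 * eta)); [apply Rinv_0_lt_compat; lra|].
    replace (e ^ 2 * eta * T * / (e ^ 2 * eta)) with T by (field; lra). unfold Rdiv in HT. lra. }
  pose proof (exp_ineq1_le (e * T)).
  replace (exp (- e * T)) with (/ exp (e * T)) by (rewrite <- exp_Ropp; f_equal; ring).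
  assert (/ exp (e * T) <= / (e * T)) by (apply Rinv_le_contravar; nra).
  apply Rle_trans with (2 * / (e * T) / e).
  - unfold Rdiv. apply Rmult_le_compat_r; [apply Rlt_le, Rinv_0_lt_compat|]; lra.
  - apply Rmult_le_reg_r with (e ^ 2 * T * 8); [nra|].
    replace (2 * / (e * T) / e * (e ^ 2 * T * 8)) with 16 by (field; split; lra).
    replace (eta / 8 * (e ^ 2 * T * 8)) with (e ^ 2 * eta * T) by (field; lra). lra.
Qed.

Lemma sqrt_threshold K eta : 0 <= K -> 0 < eta ->
  exists T0, 1 <= T0 /\ 2 * K / sqrt T0 <= eta.
Proof.
  intros HK Heta. exists (Rmax 1 ((2 * K / eta) ^ 2)). split; [apply Rmax_l|].
  set (T0 := Rmax 1 ((2 * K / eta) ^ 2)).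
  assert (0 < sqrt T0) by (apply sqrt_lt_R0; unfold T0; pose proof (Rmax_l 1 ((2 * K / eta) ^ 2)); lra).
  assert (2 * K / eta <= sqrt T0).
  { rewrite <- (sqrt_pow2 (2 * K / eta)); [apply sqrt_le_1_alt, Rmax_r|].
    apply Rmult_le_pos; [lra | apply Rlt_le, Rinv_0_lt_compat; lra]. }
  apply Rmult_le_reg_r with (sqrt T0 / eta); [apply Rdiv_lt_0_compat; lra|].
  replace (2 * K / sqrt T0 * (sqrt T0 / eta)) with (2 * K / eta) by (field; lra).
  replace (eta * (sqrt T0 / eta)) with (sqrt T0) by (field; lra). auto.
Qed.

Lemma at_right_0_interval dl : 0 < dl -> at_right 0 (fun u => 0 < u < dl).
Proof.
  intros Hdl. exists (mkposreal dl Hdl). intros y Hy Hy0. simpl in Hy.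
  unfold ball in Hy; simpl in Hy. unfold AbsRing_ball, abs, minus, plus, opp in Hy; simpl in Hy.
  rewrite Ropp_0, Rplus_0_r in Hy. apply Rabs_def2 in Hy. lra.
Qed.

Section LaplaceLimit.

Variables (S : R -> R) (K : R).
Hypotheses (K_nonneg : 0 <= K) (S_cont : forall t, continuous S t)
  (S_le_1 : forall t, Rabs (S t) <= 1) (S_decay : forall t, 1 <= t -> Rabs (S t) <= K / (t * sqrt t)).

Lemma laplace_diff_bound u v T0 T : 0 < u -> 0 < v -> 1 <= T0 <= T ->
  Rabs (RInt (fun t => (exp (- v * t) - exp (- u * t)) * S t) 0 T)
  <= T0 * (Rabs (u - v) * T0) + 2 * K / sqrt T0.
Proof.
  intros Hu Hv HT. set (h := fun t => (exp (- v * t) - exp (- u * t)) * S t).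
  assert (Hh : forall t, continuous h t).
  { intros t. apply (continuous_mult (K := R_AbsRing) (fun t => exp (- v * t) - exp (- u * t)) S);
      auto.
    apply (ex_derive_continuous (V := R_NormedModule)). auto_derive. auto. }
  rewrite (RInt_Chasles_cont h 0 T0 T Hh).
  assert (P1 : Rabs (RInt h 0 T0) <= T0 * (Rabs (u - v) * T0)).
  { replace (T0 * (Rabs (u - v) * T0)) with (RInt (fun _ => Rabs (u - v) * T0) 0 T0)
      by (rewrite RInt_const_R; change_eq_R; ring).
    apply abs_RInt_le_abs_bound; [lra | apply ex_RInt_cont; auto | apply ex_RInt_const|].
    intros x Hx. unfold h. rewrite Rabs_mult.
    pose proof (exp_lipschitz_below 0 (- v * x) (- u * x) ltac:(nra) ltac:(nra)) as Hl.
    rewrite exp_0, Rmult_1_l in Hl.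
    replace (- v * x - - u * x) with ((u - v) * x) in Hl by ring.
    rewrite Rabs_mult, (Rabs_right x) in Hl by lra.
    pose proof (S_le_1 x). pose proof (Rabs_pos (S x)). pose proof (Rabs_pos (u - v)).
    pose proof (Rabs_pos (exp (- v * x) - exp (- u * x))).
    apply Rle_trans with (Rabs (u - v) * x * 1); [apply Rmult_le_compat; auto | nra]. }
  assert (P2 : Rabs (RInt h T0 T) <= 2 * K / sqrt T0).
  { eapply Rle_trans.
    - apply abs_RInt_le_abs_bound with (h := fun t => K / (t * sqrt t));
        [lra | apply ex_RInt_cont; auto | eexists; apply is_RInt_pow_neg_3_2; lra |].
      intros x Hx. unfold h. rewrite Rabs_mult.
      assert (Hexp : forall w, 0 < w -> 0 < exp (- w * x) <= 1).
      { intros w Hw. split; [apply exp_pos|]. rewrite <- exp_0.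
        destruct (Rle_lt_or_eq_dec (- w * x) 0) as [Hlt|Heq]; [nra| |rewrite Heq; lra].
        apply Rlt_le, exp_increasing; auto. }
      pose proof (Hexp v Hv). pose proof (Hexp u Hu).
      assert (Rabs (exp (- v * x) - exp (- u * x)) <= 1) by (apply Rabs_le; lra).
      pose proof (S_decay x ltac:(lra)). pose proof (Rabs_pos (S x)).
      pose proof (Rabs_pos (exp (- v * x) - exp (- u * x))).
      apply Rle_trans with (1 * (K / (x * sqrt x))); [apply Rmult_le_compat; auto | lra].
    - rewrite (is_RInt_unique _ _ _ _ (is_RInt_pow_neg_3_2 K T0 T ltac:(lra))).
      assert (0 <= 2 * K / sqrt T) by
        (apply Rmult_le_pos; [lra | apply Rlt_le, Rinv_0_lt_compat, sqrt_lt_R0; lra]).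
      lra. }
  eapply Rle_trans; [apply Rabs_triang|]. lra.
Qed.

(* [Th] is the Laplace transform [eps ↦ ∫_0^∞ exp (- eps t) S t dt], given through its
   truncations; the t^(-3/2) decay of [S] makes it Cauchy as [eps → 0+]. *)
Lemma laplace_limit_exists (Th : R -> R) :
  (forall e T, 0 < e -> 0 <= T ->
     Rabs (Th e - RInt (fun t => exp (- e * t) * S t) 0 T) <= 2 * exp (- e * T) / e) ->
  exists L, filterlim Th (at_right 0) (locally L).
Proof.
  intros HTh.
  apply (proj1 (filterlim_locally_cauchy (U := R_CompleteSpace) (F := at_right 0) Th)).
  intros eta. pose proof (cond_pos eta) as Heta.
  destruct (sqrt_threshold K (eta / 4) K_nonneg ltac:(lra)) as [T0 [HT01 HT0K]].
  set (dl := eta / (4 * (T0 * T0) + 1)).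
  assert (Hdl : 0 < dl) by (apply Rdiv_lt_0_compat; nra).
  assert (HdlT : dl * T0 * T0 <= eta / 4).
  { unfold dl. apply Rmult_le_reg_r with (4 * (T0 * T0) + 1); [nra|].
    replace (eta / (4 * (T0 * T0) + 1) * T0 * T0 * (4 * (T0 * T0) + 1))
      with (eta * (T0 * T0)) by (field; nra). nra. }
  exists (fun u => 0 < u < dl). split; [apply at_right_0_interval; auto|].
  intros u v Hu Hv.
  unfold ball; simpl; unfold AbsRing_ball, abs, minus, plus, opp; simpl.
  set (T := Rmax T0 (Rmax (16 / (u ^ 2 * eta)) (16 / (v ^ 2 * eta)))).
  assert (HTT0 : T0 <= T) by apply Rmax_l.
  assert (Hru : 2 * exp (- u * T) / u <= eta / 8)
    by (apply exp_tail_small; try lra; eapply Rle_trans; [apply Rmax_l | apply Rmax_r]).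
  assert (Hrv : 2 * exp (- v * T) / v <= eta / 8)
    by (apply exp_tail_small; try lra; eapply Rle_trans; [apply Rmax_r | apply Rmax_r]).
  pose proof (HTh u T ltac:(lra) ltac:(lra)) as Au.
  pose proof (HTh v T ltac:(lra) ltac:(lra)) as Av.
  assert (Hc : forall w t, continuous (fun t => exp (- w * t) * S t) t).
  { intros w t. apply (continuous_mult (K := R_AbsRing) (fun t => exp (- w * t)) S); auto.
    apply (ex_derive_continuous (V := R_NormedModule)). auto_derive. auto. }
  assert (ED : RInt (fun t => exp (- v * t) * S t) 0 T - RInt (fun t => exp (- u * t) * S t) 0 T
               = RInt (fun t => (exp (- v * t) - exp (- u * t)) * S t) 0 T).
  { rewrite <- RInt_sub by (apply ex_RInt_cont; auto).
    apply RInt_ext. intros; change_eq_R; ring. }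
  pose proof (laplace_diff_bound u v T0 T ltac:(lra) ltac:(lra) ltac:(lra)) as D.
  assert (Rabs (u - v) < dl) by (apply Rabs_def1; lra).
  replace (Th v + - Th u) with ((Th v - RInt (fun t => exp (- v * t) * S t) 0 T)
     - (Th u - RInt (fun t => exp (- u * t) * S t) 0 T)
     + RInt (fun t => (exp (- v * t) - exp (- u * t)) * S t) 0 T) by (rewrite <- ED; ring).
  eapply Rle_lt_trans; [apply Rabs_triang|].
  eapply Rle_lt_trans; [apply Rplus_le_compat_r, Rabs_triang|].
  rewrite Rabs_Ropp. nra.
Qed.

End LaplaceLimit.

Lemma res_profile_limit d al phi : (3 <= d)%nat -> exists L,
  filterlim (fun eps => disp_int d (fun _ e => res_profile eps phi (al - e)) 0 0)
            (at_right 0) (locally L).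
Proof.
  intros Hd. set (S := fun t => disp_int d (fun t e => wave t (al * t + phi) e) t 0).
  apply (laplace_limit_exists S (wave_const d)).
  - unfold wave_const. apply Rmult_le_pos; apply pow_le; lra.
  - intros t. apply loc_lipschitz2_continuous_l, disp_int_loc_lipschitz2.
    apply loc_lipschitz2_wave_phase.
  - intros t. apply disp_int_bound; [apply loc_lipschitz2_wave_phase|].
    intros; apply Rabs_le, SIN_bound.
  - intros t Ht. apply (disp_int_wave_decay d t (al * t + phi) Hd Ht).
  - intros e T He _. rewrite (disp_int_res_profile al e phi He d T).
    unfold S. match goal with |- Rabs (?A - ?B - ?A) <= _ =>
      replace (A - B - A) with (- B) by ring end.
    rewrite Rabs_Ropp. apply disp_int_bound; [apply loc_lipschitz2_damped_wave_primitive; auto|].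
    intros; apply damped_wave_primitive_bound; auto.
Qed.

Lemma Theta_eps_re d al eps :
  fst (Theta_eps d al eps) = disp_int d (fun _ e => res_profile eps 0 (al - e)) 0 0.
Proof.
  unfold Theta_eps, cint, disp_int. simpl. f_equal. apply functional_extensionality. intros q.
  unfold res_profile, Cinv, Re. simpl. rewrite sin_0, cos_0, !Rplus_0_r, Rmult_0_r, Rplus_0_l, Rmult_1_r.
  reflexivity.
Qed.

Lemma Theta_eps_im d al eps :
  snd (Theta_eps d al eps) = disp_int d (fun _ e => res_profile eps (- (PI / 2)) (al - e)) 0 0.
Proof.
  unfold Theta_eps, cint, disp_int. simpl. f_equal. apply functional_extensionality. intros q.
  unfold res_profile, Cinv, Im. simpl. rewrite sin_neg, cos_neg, sin_PI2, cos_PI2, !Rplus_0_r.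
  unfold Rdiv. rewrite Rmult_0_r, Rplus_0_r. ring.
Qed.

Lemma Theta_exists d al : (3 <= d)%nat -> exists th, is_Theta d al th /\
  filterlim (fun eps => disp_int d (fun _ e => res_profile eps (- (PI / 2)) (al - e)) 0 0)
            (at_right 0) (locally (Im th)).
Proof.
  intros Hd.
  destruct (res_profile_limit d al 0 Hd) as [L1 H1].
  destruct (res_profile_limit d al (- (PI / 2)) Hd) as [L2 H2].
  exists (L1, L2). split; [|exact H2].
  apply filterlim_locally. intros eps.
  pose proof (proj1 (filterlim_locally _ _) H1 eps) as F1.
  pose proof (proj1 (filterlim_locally _ _) H2 eps) as F2.
  eapply filter_imp; [|apply (filter_and _ _ F1 F2)].
  intros e [B1 B2]. rewrite <- Theta_eps_re in B1. rewrite <- Theta_eps_im in B2.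
  split; assumption.
Qed.

(** * Lower bound for the Poisson integral *)

Definition poisson (eps a : R) : R := eps / (a ^ 2 + eps ^ 2).

Lemma loc_lipschitz2_poisson al eps : 0 < eps ->
  loc_lipschitz2 (fun _ e => poisson eps (al - e)).
Proof.
  intros He. replace (fun (_ : R) e => poisson eps (al - e))
    with (fun (_ : R) e => res_profile eps (PI / 2) (al - e));
    [apply loc_lipschitz2_res_profile; auto|].
  do 2 (apply functional_extensionality; intros).
  unfold res_profile, poisson. rewrite sin_PI2, cos_PI2. f_equal. ring.
Qed.

Lemma disp_int_res_profile_im d al eps : 0 < eps ->
  disp_int d (fun _ e => res_profile eps (- (PI / 2)) (al - e)) 0 0
  = - disp_int d (fun _ e => poisson eps (al - e)) 0 0.
Proof.
  intros He.
  pose proof (disp_int_lin d _ _ (-1) 0 (loc_lipschitz2_poisson al eps He)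
    (loc_lipschitz2_const 0) 0 0) as E.
  replace (- disp_int d (fun _ e => poisson eps (al - e)) 0 0)
    with (-1 * disp_int d (fun _ e => poisson eps (al - e)) 0 0
          + 0 * disp_int d (fun _ _ => 0) 0 0) by ring.
  rewrite <- E. unfold disp_int. f_equal. apply functional_extensionality. intros q.
  unfold res_profile, poisson. rewrite sin_neg, cos_neg, sin_PI2, cos_PI2. field.
  pose proof (sum_sq_pos (al - (edisp d q + 0)) eps He). lra.
Qed.

Lemma sin_2PI_near x y s : sin (2 * PI * x) = s -> Rabs (y - x) <= s / (4 * PI) ->
  s / 2 <= sin (2 * PI * y) <= 3 * s / 2.
Proof.
  intros Hs Hy. pose proof PI_RGT_0.
  pose proof (sin_2PI_lipschitz x y) as Hl. rewrite Hs in Hl.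
  assert (2 * PI * Rabs (y - x) <= s / 2).
  { apply Rle_trans with (2 * PI * (s / (4 * PI))); [apply Rmult_le_compat_l; lra|].
    right; field; lra. }
  apply Rabs_le_between in Hl. lra.
Qed.

Lemma edisp1_increment x a b s : sin (2 * PI * x) = s -> a <= b ->
  Rabs (a - x) <= s / (4 * PI) -> Rabs (b - x) <= s / (4 * PI) ->
  PI * s * (b - a) <= edisp1 b - edisp1 a <= 3 * PI * s * (b - a).
Proof.
  intros Hs Hab Ha Hb. pose proof PI_RGT_0.
  destruct (MVT_gen edisp1 a b (fun y => 2 * PI * sin (2 * PI * y))) as [c [Hc Heq]].
  - intros; apply is_derive_edisp1.
  - intros y _. apply continuity_pt_filterlim, edisp1_continuous.
  - rewrite Rmin_left, Rmax_right in Hc by lra.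
    assert (Rabs (c - x) <= s / (4 * PI)).
    { apply Rabs_le_between in Ha. apply Rabs_le_between in Hb. apply Rabs_le. lra. }
    pose proof (sin_2PI_near x c s Hs H0).
    assert (0 <= PI * (b - a)) by nra. rewrite Heq. split; nra.
Qed.

Lemma atan_ge_PI4 u : 1 <= u -> PI / 4 <= atan u.
Proof.
  intros Hu. rewrite <- atan_1.
  destruct (Rle_lt_or_eq_dec 1 u Hu) as [Hlt|Heq]; [apply Rlt_le, atan_increasing; auto|].
  rewrite Heq; lra.
Qed.

Lemma atan_window_increment eps beta x s : 0 < eps -> 0 < s -> sin (2 * PI * x) = s ->
  Rabs (beta - edisp1 x) <= s ^ 2 / 8 -> eps <= s ^ 2 / 8 ->
  PI / 2 <= atan ((edisp1 (x + s / (4 * PI)) - beta) / eps)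
            - atan ((edisp1 (x - s / (4 * PI)) - beta) / eps).
Proof.
  intros He Hs Hsx Hb Hes. pose proof PI_RGT_0.
  assert (Hdl : 0 <= s / (4 * PI)) by (apply Rlt_le, Rdiv_lt_0_compat; lra).
  assert (Hx0 : Rabs (x - x) <= s / (4 * PI)) by (rewrite Rminus_diag, Rabs_R0; lra).
  assert (Hxp : Rabs (x + s / (4 * PI) - x) <= s / (4 * PI))
    by (replace (x + s / (4 * PI) - x) with (s / (4 * PI)) by ring; rewrite Rabs_right; lra).
  assert (Hxm : Rabs (x - s / (4 * PI) - x) <= s / (4 * PI))
    by (replace (x - s / (4 * PI) - x) with (- (s / (4 * PI))) by ring;
        rewrite Rabs_Ropp, Rabs_right; lra).
  pose proof (edisp1_increment x x (x + s / (4 * PI)) s Hsx ltac:(lra) Hx0 Hxp) as Hup.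
  pose proof (edisp1_increment x (x - s / (4 * PI)) x s Hsx ltac:(lra) Hxm Hx0) as Hlo.
  assert (Hmu : PI * s * (s / (4 * PI)) = s ^ 2 / 4) by (field; lra).
  replace (x + s / (4 * PI) - x) with (s / (4 * PI)) in Hup by ring.
  replace (x - (x - s / (4 * PI))) with (s / (4 * PI)) in Hlo by ring.
  apply Rabs_le_between in Hb.
  assert (Hdiv : forall z, eps <= z -> 1 <= z / eps).
  { intros z Hz. apply Rmult_le_reg_r with eps; [lra|].
    replace (z / eps * eps) with z by (field; lra). lra. }
  assert (H1 : 1 <= (edisp1 (x + s / (4 * PI)) - beta) / eps) by (apply Hdiv; lra).
  assert (H2 : 1 <= (beta - edisp1 (x - s / (4 * PI))) / eps) by (apply Hdiv; lra).
  replace ((edisp1 (x - s / (4 * PI)) - beta) / eps)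
    with (- ((beta - edisp1 (x - s / (4 * PI))) / eps)) by (field; lra).
  rewrite atan_opp. pose proof (atan_ge_PI4 _ H1). pose proof (atan_ge_PI4 _ H2). lra.
Qed.

Lemma poisson_pos eps a : 0 < eps -> 0 < poisson eps a.
Proof. intros He. apply Rdiv_lt_0_compat, sum_sq_pos; auto. Qed.

Lemma poisson_edisp1_continuous eps beta : 0 < eps ->
  forall y, continuous (fun y => poisson eps (beta - edisp1 y)) y.
Proof.
  intros He y. apply (ex_derive_continuous (V := R_NormedModule)). unfold poisson, edisp1.
  auto_derive. pose proof (sum_sq_pos (beta - (1 - cos (2 * PI * y))) eps He). simpl in *. lra.
Qed.

Lemma is_derive_atan_edisp1 eps beta y : 0 < eps ->
  is_derive (fun y => atan ((edisp1 y - beta) / eps)) y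
            (2 * PI * sin (2 * PI * y) * poisson eps (beta - edisp1 y)).
Proof.
  intros He. pose proof (sum_sq_pos (beta - edisp1 y) eps He).
  assert (Hd1 : is_derive (fun y => (edisp1 y - beta) / eps) y (2 * PI * sin (2 * PI * y) / eps))
    by (unfold edisp1; auto_derive; [lra | field; lra]).
  pose proof (is_derive_comp atan _ y _ _
    (proj2 (is_derive_Reals _ _ _) (derivable_pt_lim_atan _)) Hd1) as Hd2.
  unfold poisson.
  replace (2 * PI * sin (2 * PI * y) * (eps / ((beta - edisp1 y) ^ 2 + eps ^ 2)))
    with (2 * PI * sin (2 * PI * y) / eps * / (1 + ((edisp1 y - beta) / eps) ^ 2));
    [exact Hd2|].
  field. split; [lra|].
  replace (eps ^ 2 + (edisp1 y - beta) ^ 2) with ((beta - edisp1 y) ^ 2 + eps ^ 2) by ring. lra.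
Qed.

(* The Poisson kernel [poisson eps (beta - edisp1 y)] is, up to the factor
   [edisp1' y <= 3 PI s], the derivative of [atan ((edisp1 y - beta) / eps)], which
   increases by at least [PI / 2] across the window. *)
Lemma poisson_window_lb eps beta x s : 0 < eps -> 0 < s -> sin (2 * PI * x) = s ->
  Rabs (beta - edisp1 x) <= s ^ 2 / 8 -> eps <= s ^ 2 / 8 ->
  / (6 * s) <= RInt (fun y => poisson eps (beta - edisp1 y)) (x - s / (4 * PI)) (x + s / (4 * PI)).
Proof.
  intros He Hs Hsx Hb Hes. pose proof PI_RGT_0.
  set (dl := s / (4 * PI)).
  assert (Hdl : 0 < dl) by (unfold dl; apply Rdiv_lt_0_compat; lra).
  set (f := fun y => poisson eps (beta - edisp1 y)).
  set (A := fun y => atan ((edisp1 y - beta) / eps)).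
  set (dA := fun y => 2 * PI * sin (2 * PI * y) * f y).
  assert (Hfc : forall y, continuous f y) by (apply poisson_edisp1_continuous; auto).
  assert (HdAc : forall y, continuous dA y).
  { intros y. apply (continuous_mult (K := R_AbsRing)); auto.
    apply (ex_derive_continuous (V := R_NormedModule)). auto_derive. auto. }
  assert (IA : is_RInt dA (x - dl) (x + dl) (A (x + dl) - A (x - dl)))
    by (apply (is_RInt_derive (V := R_CompleteNormedModule) A dA); intros;
        [apply is_derive_atan_edisp1 | apply HdAc]; auto).
  assert (Hat : PI / 2 <= A (x + dl) - A (x - dl)) by (apply atan_window_increment; auto).
  assert (Hcmp : forall y, x - dl <= y <= x + dl -> dA y / (3 * PI * s) <= f y).
  { intros y Hy. pose proof (sin_2PI_near x y s Hsx ltac:(apply Rabs_le; fold dl; lra)).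
    assert (0 <= f y) by (apply Rlt_le, poisson_pos; auto).
    assert (0 < 3 * PI * s) by nra. assert (0 <= PI * f y) by nra.
    unfold dA. apply Rmult_le_reg_r with (3 * PI * s); [lra|].
    unfold Rdiv. rewrite Rmult_assoc, Rinv_l by lra. nra. }
  apply Rle_trans with (RInt (fun y => dA y / (3 * PI * s)) (x - dl) (x + dl)).
  - rewrite (RInt_ext _ (fun y => (/ (3 * PI * s)) * dA y + 0 * dA y))
      by (intros; unfold Rdiv; change_eq_R; ring).
    rewrite RInt_lin, (is_RInt_unique _ _ _ _ IA) by (eexists; eauto).
    replace (/ (6 * s)) with (/ (3 * PI * s) * (PI / 2)) by (field; lra).
    rewrite Rmult_0_l, Rplus_0_r.
    apply Rmult_le_compat_l; [apply Rlt_le, Rinv_0_lt_compat; nra | exact Hat].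
  - apply RInt_le; [lra| | apply ex_RInt_cont; auto | intros y Hy; apply Hcmp; lra].
    apply ex_RInt_cont. intros. apply (continuous_mult (K := R_AbsRing) dA (fun _ => _)); auto.
    apply continuous_const.
Qed.

Lemma poisson_int_lb eps beta x s : 0 < eps -> 0 < s -> 0 <= x -> x + s / (4 * PI) <= /2 ->
  sin (2 * PI * x) = s -> Rabs (beta - edisp1 x) <= s ^ 2 / 8 -> eps <= s ^ 2 / 8 ->
  / (6 * s) <= RInt (fun y => poisson eps (beta - edisp1 y)) (-/2) (/2).
Proof.
  intros He Hs Hx Hxd Hsx Hb Hes. pose proof PI_ge_3.
  assert (s / (4 * PI) <= /4).
  { pose proof (SIN_bound (2 * PI * x)). apply Rmult_le_reg_r with (4 * PI); [lra|].
    replace (s / (4 * PI) * (4 * PI)) with s by (field; lra). nra. }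
  assert (0 < s / (4 * PI)) by (apply Rdiv_lt_0_compat; lra).
  eapply Rle_trans; [apply (poisson_window_lb eps beta x s); auto|].
  apply RInt_nonneg_subinterval_le; try lra.
  - apply poisson_edisp1_continuous; auto.
  - intros y. apply Rlt_le, poisson_pos; auto.
Qed.

(* Restricting each of the [k] extra coordinates to a window of width [2 dl] around [x]
   moves the argument of the one-dimensional integral by at most [k gm]. *)
Lemma disp_int_window_lb (h : R -> R) : loc_lipschitz2 (fun _ e => h e) ->
  (forall e, 0 <= h e) -> forall x dl gm c1 rho m,
  -/2 <= x - dl -> x + dl <= /2 -> 0 < dl ->
  (forall y, x - dl <= y <= x + dl -> Rabs (edisp1 y - edisp1 x) <= gm) ->
  (forall c, Rabs (c - c1) <= rho -> m <= disp_int 1 (fun _ e => h e) 0 c) -> 0 <= m ->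
  forall k c, Rabs (c + INR k * edisp1 x - c1) <= rho - INR k * gm ->
    (2 * dl) ^ k * m <= disp_int (S k) (fun _ e => h e) 0 c.
Proof.
  intros HL H0 x dl gm c1 rho m Hx1 Hx2 Hdl Hg Hin Hm.
  induction k as [|k IH]; intros c Hc.
  - rewrite pow_O, Rmult_1_l. apply Hin.
    simpl INR in Hc. rewrite !Rmult_0_l, Rplus_0_r, Rminus_0_r in Hc. exact Hc.
  - set (f := fun y => disp_int (S k) (fun _ e => h e) 0 (edisp1 y + c)).
    assert (Hfc : forall y, continuous f y)
      by (apply slice_continuous, disp_int_loc_lipschitz2; auto).
    assert (Hf0 : forall y, 0 <= f y) by (intros; apply disp_int_nonneg; auto).
    rewrite disp_int_S. fold f.
    eapply Rle_trans; [|apply (RInt_nonneg_subinterval_le f _ (x - dl) (x + dl)); auto; lra].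
    replace ((2 * dl) ^ S k * m) with ((x + dl - (x - dl)) * ((2 * dl) ^ k * m)) by (simpl; ring).
    rewrite <- RInt_const_R. apply RInt_le; [lra | apply ex_RInt_const | apply ex_RInt_cont; auto|].
    intros y Hy. apply IH.
    pose proof (Hg y ltac:(lra)). rewrite S_INR in Hc.
    replace (edisp1 y + c + INR k * edisp1 x - c1)
      with ((c + (INR k + 1) * edisp1 x - c1) + (edisp1 y - edisp1 x)) by ring.
    eapply Rle_trans; [apply Rabs_triang|]. lra.
Qed.

Lemma edisp1_near_bound x y s : sin (2 * PI * x) = s -> Rabs (y - x) <= s / (4 * PI) ->
  Rabs (edisp1 y - edisp1 x) <= 3 * PI * s * Rabs (y - x).
Proof.
  intros Hs Hy. assert (H0 : Rabs (x - x) <= s / (4 * PI))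
    by (rewrite Rminus_diag, Rabs_R0; eapply Rle_trans; [apply Rabs_pos | exact Hy]).
  destruct (Rle_or_lt x y) as [Hxy|Hxy].
  - pose proof (edisp1_increment x x y s Hs Hxy H0 Hy).
    rewrite !Rabs_right by lra. lra.
  - pose proof (edisp1_increment x y x s Hs ltac:(lra) Hy H0).
    rewrite Rabs_left1, Rabs_left by lra. lra.
Qed.

Lemma disp_int_poisson_lb k eps al x s : (1 <= k)%nat -> 0 < eps -> 0 < s -> 0 <= x ->
  x + s / (4 * PI) <= /2 -> sin (2 * PI * x) = s -> al = INR (S k) * edisp1 x ->
  eps <= s ^ 2 / 8 ->
  s ^ (k - 1) / (6 * (12 * PI * INR k) ^ k)
  <= disp_int (S k) (fun _ e => poisson eps (al - e)) 0 0.
Proof.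
  intros Hk He Hs Hx Hxd Hsx Hal Hes. pose proof PI_ge_3.
  assert (Hkr : 1 <= INR k) by (apply (le_INR 1); lia).
  assert (Hs1 : s <= 1) by (rewrite <- Hsx; apply SIN_bound).
  set (dl := s / (24 * PI * INR k)).
  assert (Hdl : 0 < dl) by (apply Rdiv_lt_0_compat; nra).
  assert (Hdl4 : dl <= s / (4 * PI))
    by (unfold dl, Rdiv; apply Rmult_le_compat_l; [lra | apply Rinv_le_contravar; nra]).
  assert (Hs4 : s / (4 * PI) <= /2)
    by (apply Rmult_le_reg_r with (4 * PI); [lra|]; unfold Rdiv;
        rewrite Rmult_assoc, Rinv_l by lra; nra).
  assert (Hgw : forall y, x - dl <= y <= x + dl -> Rabs (edisp1 y - edisp1 x) <= 3 * PI * s * dl).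
  { intros y Hy. assert (Rabs (y - x) <= dl) by (apply Rabs_le; lra).
    eapply Rle_trans; [apply (edisp1_near_bound x y s Hsx); lra|].
    apply Rmult_le_compat_l; [nra | auto]. }
  assert (Hin : forall c, Rabs (c - INR k * edisp1 x) <= s ^ 2 / 8 ->
                  / (6 * s) <= disp_int 1 (fun _ e => poisson eps (al - e)) 0 c).
  { intros c Hc. rewrite disp_int_S.
    rewrite (RInt_ext _ (fun y => poisson eps ((al - c) - edisp1 y)))
      by (intros; rewrite disp_int_0; f_equal; ring).
    apply poisson_int_lb with x; auto.
    rewrite Hal, S_INR. replace ((INR k + 1) * edisp1 x - c - edisp1 x)
      with (- (c - INR k * edisp1 x)) by ring.
    rewrite Rabs_Ropp. auto. }
  eapply Rle_trans; [|apply (disp_int_window_lb (fun e => poisson eps (al - e))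
    (loc_lipschitz2_poisson al eps He) (fun e => Rlt_le _ _ (poisson_pos _ _ He)) x dl (3 * PI * s * dl) (INR k * edisp1 x) (s ^ 2 / 8) (/ (6 * s)));
    try lra; auto].
  - right. unfold dl. replace (2 * (s / (24 * PI * INR k))) with (s / (12 * PI * INR k))
      by (field; lra).
    assert (Hsk : s ^ k = s * s ^ (k - 1)) by (replace k with (S (k - 1)) at 1 by lia; reflexivity).
    unfold Rdiv. rewrite (Rpow_mult_distr s), pow_inv, Hsk. field. split; [lra|].
    apply pow_nonzero. nra.
  - apply Rlt_le, Rinv_0_lt_compat. lra.
  - rewrite Rplus_0_l, Rminus_diag, Rabs_R0. unfold dl. right. field. lra.
Qed.

(** * Distance to the origin and the vertices *)

Lemma edisp1_ge_sq y : Rabs y <= /2 -> 2 * y ^ 2 <= edisp1 y.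
Proof.
  intros Hy. pose proof PI_ge_3. pose proof PI_4. pose proof (Rabs_pos y).
  unfold edisp1. replace (2 * PI * y) with (2 * (PI * y)) by ring. rewrite cos_2a_sin.
  assert (Hs : Rabs y <= sin (PI * Rabs y)).
  { assert (PI * Rabs y <= 2) by nra.
    pose proof (sin_ge_third (PI * Rabs y) ltac:(split; nra)). nra. }
  assert (E : sin (PI * y) * sin (PI * y) = sin (PI * Rabs y) * sin (PI * Rabs y)).
  { unfold Rabs. destruct Rcase_abs; [|reflexivity].
    replace (PI * - y) with (- (PI * y)) by ring. rewrite sin_neg. ring. }
  replace (y ^ 2) with (Rabs y * Rabs y) by (rewrite <- (pow2_abs y); ring).
  rewrite Rmult_assoc, E. nra.
Qed.

Lemma edisp1_vertex_coord y v : Rabs y <= /2 -> v = (if Rle_dec 0 y then /2 else -/2) ->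
  2 * (y - v) ^ 2 <= 2 - edisp1 y.
Proof.
  intros Hy Hv.
  assert (E : 2 - edisp1 y = edisp1 (y - v)).
  { unfold edisp1. destruct (Rle_dec 0 y); subst v.
    - replace (2 * PI * (y - /2)) with (2 * PI * y - PI) by field.
      rewrite cos_minus, cos_PI, sin_PI. ring.
    - replace (2 * PI * (y - -/2)) with (2 * PI * y + PI) by field.
      rewrite cos_plus, cos_PI, sin_PI. ring. }
  rewrite E. apply edisp1_ge_sq. apply Rabs_le_between in Hy.
  apply Rabs_le. destruct (Rle_dec 0 y); subst v; lra.
Qed.

Lemma edisp_ge_sqdist_origin d p : (forall j, (j < d)%nat -> Rabs (p j) <= /2) ->
  2 * sqdist d p (fun _ => 0) <= edisp d p.
Proof.
  induction d as [|d IH]; intros Hp; simpl; [lra|].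
  pose proof (IH (fun j Hj => Hp j ltac:(lia))).
  pose proof (edisp1_ge_sq (p d) (Hp d ltac:(lia))). unfold edisp1 in *.
  rewrite Rminus_0_r. lra.
Qed.

Lemma edisp_le_sqdist_vertex d p v :
  (forall j, (j < d)%nat -> 2 * (p j - v j) ^ 2 <= 2 - edisp1 (p j)) ->
  2 * sqdist d p v <= 2 * INR d - edisp d p.
Proof.
  induction d as [|d IH]; intros Hp; [simpl; lra|].
  change (sqdist (S d) p v) with (sqdist d p v + (p d - v d) ^ 2).
  change (edisp (S d) p) with (edisp d p + edisp1 (p d)). rewrite S_INR.
  pose proof (IH (fun j Hj => Hp j ltac:(lia))). pose proof (Hp d ltac:(lia)). lra.
Qed.

Lemma blists_complete n (b : list bool) : length b = n -> In b (blists n).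
Proof.
  revert b; induction n as [|n IH]; intros b Hb.
  - destruct b; simpl in *; [left; auto | lia].
  - destruct b as [|x l]; simpl in Hb; [lia|].
    simpl. apply in_flat_map. exists l. split; [apply IH; lia|].
    destruct x; simpl; auto.
Qed.

Lemma fold_Rmin_le (L : list R) base x : In x L -> fold_right Rmin base L <= x.
Proof.
  induction L as [|a L IH]; intros Hx; simpl in *; [contradiction|].
  destruct Hx as [Hx|Hx]; [subst; apply Rmin_l|].
  eapply Rle_trans; [apply Rmin_r | apply IH; auto].
Qed.

Lemma fold_Rmin_le_base (L : list R) base : fold_right Rmin base L <= base.
Proof. induction L; simpl; [lra|]. eapply Rle_trans; [apply Rmin_r | auto]. Qed.

Lemma fold_Rmin_ge (L : list R) base m :
  m <= base -> (forall x, In x L -> m <= x) -> m <= fold_right Rmin base L.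
Proof.
  induction L as [|a L IH]; intros Hb Hx; simpl; auto.
  apply Rmin_glb; [apply Hx; left; auto | apply IH; auto].
  intros; apply Hx; right; auto.
Qed.

Lemma Ddist_nonneg d p : 0 <= Ddist d p.
Proof.
  unfold Ddist. apply fold_Rmin_ge; [apply sqrt_pos|].
  intros x Hx. apply in_map_iff in Hx. destruct Hx as [b [Hb _]]. subst. apply sqrt_pos.
Qed.

Lemma sqdist_nonneg d p v : 0 <= sqdist d p v.
Proof.
  induction d; simpl; [lra|]. pose proof (pow2_ge_0 (p d - v d)). lra.
Qed.

Lemma sq_le_of_le_sqrt D a : 0 <= D -> D <= sqrt a -> 0 <= a -> D ^ 2 <= a.
Proof.
  intros. rewrite <- (sqrt_sqrt a) by auto. simpl. rewrite Rmult_1_r.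
  apply Rmult_le_compat; auto.
Qed.

Lemma nth_map_seq (f : nat -> bool) d j : (j < d)%nat -> nth j (map f (seq 0 d)) false = f j.
Proof.
  intros. rewrite nth_indep with (d' := f 0%nat) by (rewrite length_map, length_seq; auto).
  rewrite map_nth, seq_nth by auto. reflexivity.
Qed.

Lemma Ddist_sq_bounds d p : in_torus d p ->
  2 * Ddist d p ^ 2 <= edisp d p /\ 2 * Ddist d p ^ 2 <= 2 * INR d - edisp d p.
Proof.
  intros Hp. pose proof (Ddist_nonneg d p) as HD.
  assert (Hp' : forall j, (j < d)%nat -> Rabs (p j) <= /2)
    by (intros j Hj; apply Rabs_le; apply Hp; auto).
  split.
  - pose proof (edisp_ge_sqdist_origin d p Hp').
    assert (Ddist d p <= Defs.dist d p (fun _ => 0)) by apply fold_Rmin_le_base.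
    pose proof (sq_le_of_le_sqrt _ _ HD H0 (sqdist_nonneg _ _ _)). lra.
  - set (b := map (fun j => if Rle_dec 0 (p j) then true else false) (seq 0 d)).
    assert (Hb : In b (blists d))
      by (apply blists_complete; unfold b; rewrite length_map, length_seq; auto).
    assert (Hv : forall j, (j < d)%nat -> vertex b j = if Rle_dec 0 (p j) then /2 else -/2).
    { intros j Hj. unfold vertex, b. rewrite nth_map_seq by auto.
      destruct (Rle_dec 0 (p j)); auto. }
    pose proof (edisp_le_sqdist_vertex d p (vertex b)
      (fun j Hj => edisp1_vertex_coord (p j) (vertex b j) (Hp' j Hj) (Hv j Hj))).
    assert (Ddist d p <= Defs.dist d p (vertex b))
      by (unfold Ddist; apply fold_Rmin_le, in_map_iff; exists b; auto).
    pose proof (sq_le_of_le_sqrt _ _ HD H0 (sqdist_nonneg _ _ _)). lra.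
Qed.

Lemma Ddist_le_sqrt d p : (1 <= d)%nat -> in_torus d p ->
  Ddist d p <= sqrt (edisp d p * (2 * INR d - edisp d p)).
Proof.
  intros Hd Hp. destruct (Ddist_sq_bounds d p Hp) as [B1 B2].
  pose proof (Ddist_nonneg d p). pose proof (edisp_bounds d p).
  assert (1 <= INR d) by (apply (le_INR 1); auto).
  rewrite <- (sqrt_pow2 (Ddist d p)) by auto. apply sqrt_le_1_alt.
  destruct (Rle_or_lt 1 (edisp d p)).
  - apply Rle_trans with (1 * (2 * INR d - edisp d p)); [lra | apply Rmult_le_compat_r; lra].
  - apply Rle_trans with (edisp d p * 1); [lra | apply Rmult_le_compat_l; lra].
Qed.

(** * The bound on Im omega *)

Lemma le_of_lim_at_right (f : R -> R) L M dl : 0 < dl ->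
  filterlim f (at_right 0) (locally L) -> (forall e, 0 < e < dl -> f e <= M) -> L <= M.
Proof.
  intros Hdl Hf Hb.
  destruct (Rle_or_lt L M) as [H|H]; auto. exfalso.
  assert (He : 0 < (L - M) / 2) by lra.
  pose proof (proj1 (filterlim_locally f L) Hf (mkposreal _ He)) as HF.
  destruct (filter_ex _ (filter_and _ _ HF (at_right_0_interval dl Hdl))) as [e [He1 He2]].
  simpl in He1. unfold ball in He1; simpl in He1.
  unfold AbsRing_ball, abs, minus, plus, opp in He1; simpl in He1.
  apply Rabs_def2 in He1. pose proof (Hb e He2). lra.
Qed.

Lemma diag_point d al : (1 <= d)%nat -> 0 <= al <= 2 * INR d ->
  exists x, 0 <= x <= /2 /\ INR d * edisp1 x = al.
Proof.
  intros Hd Hal. assert (Hdr : 1 <= INR d) by (apply (le_INR 1); lia).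
  assert (Hc : continuity edisp1)
    by (intros x; apply continuity_pt_filterlim, edisp1_continuous).
  assert (g0 : edisp1 0 = 0) by (unfold edisp1; rewrite Rmult_0_r, cos_0; ring).
  assert (g1 : edisp1 (/2) = 2)
    by (unfold edisp1; replace (2 * PI * /2) with PI by field; rewrite cos_PI; ring).
  destruct (IVT_gen edisp1 0 (/2) (al / INR d) Hc) as [x [Hx Hgx]].
  - rewrite g0, g1, Rmin_left, Rmax_right by lra. split.
    + apply Rmult_le_pos; [lra | apply Rlt_le, Rinv_0_lt_compat; lra].
    + apply Rmult_le_reg_r with (INR d); [lra|].
      unfold Rdiv. rewrite Rmult_assoc, Rinv_l by lra. lra.
  - exists x. rewrite Rmin_left, Rmax_right in Hx by lra. split; auto.
    rewrite Hgx. field. lra.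
Qed.

Lemma sqrt_diag_edisp d x : 0 <= x <= /2 ->
  sqrt (INR d * edisp1 x * (2 * INR d - INR d * edisp1 x)) = INR d * sin (2 * PI * x).
Proof.
  intros Hx. pose proof PI_RGT_0. pose proof (pos_INR d).
  assert (Hs : 0 <= sin (2 * PI * x)) by (apply sin_ge_0; nra).
  rewrite <- (sqrt_pow2 (INR d * sin (2 * PI * x))) by (apply Rmult_le_pos; lra).
  f_equal. pose proof (sin2_cos2 (2 * PI * x)). unfold Rsqr in *. unfold edisp1. nra.
Qed.

Definition poisson_const (d : nat) : R := / (6 * (12 * PI * INR (d - 1)) ^ (d - 1)).

Lemma poisson_const_pos d : (2 <= d)%nat -> 0 < poisson_const d.
Proof.
  intros Hd. pose proof PI_RGT_0. assert (1 <= INR (d - 1)) by (apply (le_INR 1); lia).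
  apply Rinv_0_lt_compat, Rmult_lt_0_compat; [lra | apply pow_lt; nra].
Qed.

Lemma Im_Theta_le_diag d x th : (3 <= d)%nat -> 0 <= x <= /2 ->
  filterlim (fun eps => disp_int d (fun _ e => res_profile eps (- (PI / 2))
                                                 (INR d * edisp1 x - e)) 0 0)
            (at_right 0) (locally (Im th)) ->
  Im th <= - poisson_const d * sin (2 * PI * x) ^ (d - 2).
Proof.
  intros Hd Hx Hlim. pose proof PI_ge_3.
  set (s := sin (2 * PI * x)). set (al := INR d * edisp1 x).
  assert (Hs0 : 0 <= s) by (apply sin_ge_0; nra).
  assert (Hpoi : forall eps, 0 < eps ->
    disp_int d (fun _ e => res_profile eps (- (PI / 2)) (al - e)) 0 0
    = - disp_int d (fun _ e => poisson eps (al - e)) 0 0)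
    by (intros; apply disp_int_res_profile_im; auto).
  destruct (Req_dec s 0) as [Hs|Hs].
  - rewrite Hs, pow_i, Rmult_0_r by lia.
    apply (le_of_lim_at_right _ _ _ 1 ltac:(lra) Hlim). intros e He. rewrite Hpoi by lra.
    assert (0 <= disp_int d (fun _ e0 => poisson e (al - e0)) 0 0); [|lra].
    apply disp_int_nonneg; [apply loc_lipschitz2_poisson; lra|].
    intros. apply Rlt_le, poisson_pos; lra.
  - assert (Hsp : 0 < s) by lra.
    apply (le_of_lim_at_right _ _ _ (s ^ 2 / 8) ltac:(nra) Hlim). intros e He.
    rewrite Hpoi by lra.
    assert (Hxs : x + s / (4 * PI) <= /2).
    { assert (s <= PI - 2 * PI * x) by (unfold s; rewrite <- sin_PI_x; apply sin_le_id; nra).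
      apply Rmult_le_reg_r with (4 * PI); [lra|].
      replace ((x + s / (4 * PI)) * (4 * PI)) with (4 * PI * x + s) by (field; lra). nra. }
    pose proof (disp_int_poisson_lb (d - 1) e al x s ltac:(lia) ltac:(lra) Hsp ltac:(lra) Hxs
      eq_refl ltac:(unfold al; f_equal; f_equal; lia) ltac:(lra)) as Hlb.
    replace (S (d - 1)) with d in Hlb by lia. replace (d - 1 - 1)%nat with (d - 2)%nat in Hlb by lia.
    unfold poisson_const. unfold Rdiv in Hlb. lra.
Qed.

Lemma Im_Theta_upper_bound d : (3 <= d)%nat -> exists c, 0 < c /\
  forall al, 0 <= al <= 2 * INR d -> exists th, is_Theta d al th /\
    Im th <= - c * sqrt (al * (2 * INR d - al)) ^ (d - 2).
Proof.
  intros Hd. assert (Hdr : 0 < INR d) by (apply lt_0_INR; lia).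
  assert (Hdp : 0 < INR d ^ (d - 2)) by (apply pow_lt; lra).
  exists (poisson_const d / INR d ^ (d - 2)). split.
  { apply Rdiv_lt_0_compat; auto. apply poisson_const_pos; lia. }
  intros al Hal. destruct (diag_point d al ltac:(lia) Hal) as [x [Hx Hgx]].
  destruct (Theta_exists d al Hd) as [th [Hth Hlim]].
  exists th. split; auto. subst al.
  pose proof (Im_Theta_le_diag d x th Hd Hx Hlim).
  rewrite sqrt_diag_edisp, Rpow_mult_distr by auto.
  replace (- (poisson_const d / INR d ^ (d - 2)) * (INR d ^ (d - 2) * sin (2 * PI * x) ^ (d - 2)))
    with (- poisson_const d * sin (2 * PI * x) ^ (d - 2)) by (field; lra).
  auto.
Qed.

Theorem corollary3p2 (d : nat) (hd : (3 <= d)%nat) :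
  exists c3 : R, 0 < c3 /\
    forall (lam : R) (p : nat -> R), 0 < lam -> in_torus d p ->
      exists w : C, is_omega d lam p w /\
        Im w <= - c3 * lam ^ 2 * (Ddist d p) ^ (d - 2).
Proof.
  destruct (Im_Theta_upper_bound d hd) as [c [Hc Hbound]].
  exists c. split; [exact Hc|]. intros lam p Hlam Hp.
  destruct (Hbound (edisp d p) (edisp_bounds d p)) as [th [Hth Him]].
  exists (Cplus (RtoC (edisp d p)) (Cmult (RtoC (lam ^ 2)) th)).
  split; [exists th; auto|].
  assert (HD : Ddist d p ^ (d - 2) <= sqrt (edisp d p * (2 * INR d - edisp d p)) ^ (d - 2))
    by (apply pow_incr; split; [apply Ddist_nonneg | apply Ddist_le_sqrt; auto; lia]).
  assert (Hl2 : 0 < lam ^ 2) by (apply pow_lt; lra).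
  replace (Im (Cplus (RtoC (edisp d p)) (Cmult (RtoC (lam ^ 2)) th))) with (lam ^ 2 * Im th)
    by (destruct th; unfold Cplus, Cmult, RtoC, Im; simpl; ring).
  replace (- c * lam ^ 2 * Ddist d p ^ (d - 2)) with (lam ^ 2 * (- c * Ddist d p ^ (d - 2)))
    by ring.
  apply Rmult_le_compat_l; [lra|]. nra.
Qed.
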